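(* There exist admissible sets of types $I(11,7)$, $I(11,6)$ and $I(10,6)$; that is, for each $(m,w)\in\{(11,7),(11,6),(10,6)\}$ there is an admissible set $S\subseteq\{0,1,2\}^m$ consisting of $\binom{m}{w}$ vectors, each of weight $w$.
   Context: A set $S\subseteq\{0,1,2\}^m$ is admissible if (1) for all distinct $s,s'\in S$ there are coordinates $i,j$ with $s_i=0\neq s'_i$ and $s_j\neq 0=s'_j$; and (2) for all distinct $s,s',s''\in S$ there is a coordinate $k$ such that the multiset $\{s_k,s'_k,s''_k\}$ equals $\{0,1,2\}$, $\{0,0,1\}$ or $\{0,0,2\}$. The weight of a vector is its number of nonzero coordinates. *)

From mathcomp Require Import all_boot.
Set Implicit Arguments. Unset Strict Implicit. Unset Printing Implicit Defensive.

Definition vec (m : nat) := {ffun 'I_m -> 'I_3}.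

Definition weight m (s : vec m) : nat := #|[set i | val (s i) != 0]|.

Definition cond1 m (s s' : vec m) : bool :=
  [exists i, (val (s i) == 0) && (val (s' i) != 0)] &&
  [exists j, (val (s j) != 0) && (val (s' j) == 0)].

Definition good_triple (a b c : nat) : bool :=
  [|| perm_eq [:: a; b; c] [:: 0; 1; 2],
      perm_eq [:: a; b; c] [:: 0; 0; 1] |
      perm_eq [:: a; b; c] [:: 0; 0; 2]].

Definition cond2 m (s s' s'' : vec m) : bool :=
  [exists k, good_triple (val (s k)) (val (s' k)) (val (s'' k))].

Definition admissible m (S : {set vec m}) : Prop :=
  (forall s s', s \in S -> s' \in S -> s != s' -> cond1 s s') /\
  (forall s s' s'', s \in S -> s' \in S -> s'' \in S ->
      s != s' -> s != s'' -> s' != s'' -> cond2 s s' s'').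

Definition admissible_of_type (m w : nat) : Prop :=
  exists S : {set vec m},
    [/\ admissible S, #|S| = 'C(m, w) & forall s, s \in S -> weight s = w].

From mathcomp Require Import all_boot.
Set Implicit Arguments. Unset Strict Implicit. Unset Printing Implicit Defensive.

(* The three sets are given explicitly, as lists of digit sequences.  A list is
   turned into a set of vectors of {0,1,2}^m coordinatewise; conditions (1) and
   (2) on that set only involve pairs and triples of distinct list entries and are
   symmetric in them, so they reduce to a boolean check over the ordered pairs and
   triples of the list, which is then decided by evaluation. *)

Lemma pairwise_neq (T : eqType) (r : rel T) : symmetric r ->
  forall s, pairwise r s -> {in s &, forall x y, x != y -> r x y}.
Proof.
move=> r_sym; elim=> [|x s IHs] //; rewrite pairwise_cons => /andP[/allP rx /IHs{}IHs] a b.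
rewrite !inE => /predU1P[->|as_] /predU1P[->|bs]; rewrite ?eqxx // => neq_ab.
- exact: rx.
- by rewrite r_sym; apply: rx.
- exact: IHs.
Qed.

Section Triplewise.
Variables (T : eqType) (r : T -> T -> T -> bool).

Fixpoint triplewise (s : seq T) : bool :=
  if s is x :: s' then pairwise (r x) s' && triplewise s' else true.

Hypotheses (rC12 : forall a b c, r a b c = r b a c) (rC23 : forall a b c, r a b c = r a c b).

Lemma triplewise_neq s : triplewise s ->
  forall a b c, a \in s -> b \in s -> c \in s -> [&& a != b, a != c & b != c] -> r a b c.
Proof.
elim: s => [|x s IHs] //= /andP[/(pairwise_neq (rC23 x)) rx /IHs{}IHs] a b c.
rewrite !inE => /predU1P[->|as_] /predU1P[->|bs] /predU1P[->|cs];
  rewrite ?eqxx ?andbF // => /and3P[ab ac bc].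
- exact: rx.
- by rewrite rC12; apply: rx.
- by rewrite rC23 rC12; apply: rx.
- by apply: IHs => //; rewrite ab ac bc.
Qed.

End Triplewise.

Definition good_tripleb (a b c : nat) : bool :=
  match a, b, c with
  | 0, 1, 2 | 0, 2, 1 | 1, 0, 2 | 1, 2, 0 | 2, 0, 1 | 2, 1, 0
  | 0, 0, 1 | 0, 1, 0 | 1, 0, 0 | 0, 0, 2 | 0, 2, 0 | 2, 0, 0 => true
  | _, _, _ => false
  end.

Lemma good_tripleE a b c : a < 3 -> b < 3 -> c < 3 -> good_triple a b c = good_tripleb a b c.
Proof. by case: a => [|[|[|a]]] //; case: b => [|[|[|b]]] //; case: c => [|[|[|c]]]. Qed.

Lemma good_triplebC12 a b c : good_tripleb a b c = good_tripleb b a c.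
Proof. by case: a => [|[|[|a]]]; case: b => [|[|[|b]]]; case: c => [|[|[|c]]]. Qed.

Lemma good_triplebC23 a b c : good_tripleb a b c = good_tripleb a c b.
Proof. by case: a => [|[|[|a]]]; case: b => [|[|[|b]]]; case: c => [|[|[|c]]]. Qed.

Definition ternary m (l : seq nat) : bool := (size l == m) && all (fun d => d < 3) l.

Definition vec_of_seq m (l : seq nat) : vec m := [ffun i : 'I_m => inord (nth 0 l i)].

Section VecOfSeq.
Variable m : nat.
Implicit Types (a b l : seq nat).

Lemma ternary_size l : ternary m l -> size l = m.
Proof. by case/andP=> /eqP. Qed.

Lemma vec_of_seqE l (i : 'I_m) : ternary m l -> val (vec_of_seq m l i) = nth 0 l i.
Proof.
case/andP=> /eqP size_l /allP digits; rewrite ffunE /= inordK //.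
by apply/digits/mem_nth; rewrite size_l.
Qed.

Lemma vec_of_seq_inj : {in ternary m &, injective (@vec_of_seq m)}.
Proof.
move=> a b ta tb eq_ab; apply: (@eq_from_nth _ 0) => [|i]; first by rewrite !ternary_size.
rewrite ternary_size // => lt_im.
by rewrite -(vec_of_seqE (Ordinal lt_im) ta) -(vec_of_seqE (Ordinal lt_im) tb) eq_ab.
Qed.

Lemma weight_vec_of_seq l : ternary m l -> weight (vec_of_seq m l) = count (fun d => d != 0) l.
Proof.
move=> tl; rewrite /weight cardsE cardE size_filter /enum_mem -enumT /=.
rewrite -[in RHS](mkseq_nth 0 l) ternary_size // /mkseq -val_enum_ord !count_map.
by apply: eq_count => i /=; rewrite unfold_in /= vec_of_seqE.
Qed.

End VecOfSeq.

Lemma has_iota_ord m (p : pred nat) : has p (iota 0 m) -> exists i : 'I_m, p i.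
Proof. by case/hasP=> i; rewrite mem_iota => /andP[_ lt_im] pi; exists (Ordinal lt_im). Qed.

Definition cond1_seq m (a b : seq nat) : bool :=
  has (fun i => (nth 0 a i == 0) && (nth 0 b i != 0)) (iota 0 m) &&
  has (fun i => (nth 0 a i != 0) && (nth 0 b i == 0)) (iota 0 m).

(* Structural recursion instead of indexing: the triple checks dominate the running time. *)
Fixpoint cond2_seq (a b c : seq nat) : bool :=
  match a, b, c with
  | x :: a', y :: b', z :: c' => good_tripleb x y z || cond2_seq a' b' c'
  | _, _, _ => false
  end.

Lemma cond1_seqC m : symmetric (cond1_seq m).
Proof.
by move=> a b; rewrite /cond1_seq andbC; congr (_ && _); apply: eq_has => i; rewrite andbC.
Qed.

Lemma cond2_seqC12 a b c : cond2_seq a b c = cond2_seq b a c.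
Proof. by elim: a b c => [|x a IHa] [|y b] [|z c] //=; rewrite good_triplebC12 IHa. Qed.

Lemma cond2_seqC23 a b c : cond2_seq a b c = cond2_seq a c b.
Proof. by elim: a b c => [|x a IHa] [|y b] [|z c] //=; rewrite good_triplebC23 IHa. Qed.

Lemma cond2_seqP a b c : cond2_seq a b c ->
  exists2 i, i < size a & good_tripleb (nth 0 a i) (nth 0 b i) (nth 0 c i).
Proof.
elim: a b c => [|x a IHa] [|y b] [|z c] //= /orP[xyz|/IHa[i lt_ia abc]].
- by exists 0.
- by exists i.+1.
Qed.

Lemma cond1_vec_of_seq m a b : ternary m a -> ternary m b ->
  cond1_seq m a b -> cond1 (vec_of_seq m a) (vec_of_seq m b).
Proof.
move=> ta tb /andP[/has_iota_ord[i abi] /has_iota_ord[j abj]].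
by apply/andP; split; apply/existsP; [exists i | exists j]; rewrite !vec_of_seqE.
Qed.

Lemma cond2_vec_of_seq m a b c : ternary m a -> ternary m b -> ternary m c ->
  cond2_seq a b c -> cond2 (vec_of_seq m a) (vec_of_seq m b) (vec_of_seq m c).
Proof.
move=> ta tb tc /cond2_seqP[i]; rewrite (ternary_size ta) => lt_im abci.
by apply/existsP; exists (Ordinal lt_im); rewrite good_tripleE ?ltn_ord // !vec_of_seqE.
Qed.

Definition admissible_witness m w (L : seq (seq nat)) : bool :=
  [&& all (ternary m) L, uniq L, size L == 'C(m, w),
      all (fun l => count (fun d => d != 0) l == w) L,
      pairwise (cond1_seq m) L & triplewise cond2_seq L].

Lemma admissible_of_witness m w L : admissible_witness m w L -> admissible_of_type m w.
Proof.
case/and5P=> /allP tL uL /eqP size_L /allP wL /andP[c1L c2L].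
have uSL : uniq (map (@vec_of_seq m) L).
  by rewrite map_inj_in_uniq // => a b /tL ta /tL tb; apply: vec_of_seq_inj.
exists [set s in map (@vec_of_seq m) L]; split.
- split=> [s s'|s s' s'']; rewrite !inE.
  + move=> /mapP[a aL ->] /mapP[b bL ->] neq_ab.
    apply: cond1_vec_of_seq; rewrite ?tL //.
    apply: (pairwise_neq (@cond1_seqC m) c1L) => //.
    by apply: contraNneq neq_ab => ->.
  + move=> /mapP[a aL ->] /mapP[b bL ->] /mapP[c cL ->] neq_ab neq_ac neq_bc.
    apply: cond2_vec_of_seq; rewrite ?tL //.
    apply: (triplewise_neq cond2_seqC12 cond2_seqC23 c2L) => //.
    by apply/and3P; split;
      [move: neq_ab | move: neq_ac | move: neq_bc]; apply: contraNneq => ->.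
- by rewrite cardsE (card_uniqP uSL) size_map size_L.
- by move=> s; rewrite inE => /mapP[l lL ->]; rewrite weight_vec_of_seq ?tL //; apply/eqP/wL.
Qed.

Definition witness_11_7 : seq (seq nat) := [::
  [:: 1; 2; 2; 2; 1; 2; 1; 0; 0; 0; 0];
  [:: 2; 2; 1; 1; 1; 2; 0; 2; 0; 0; 0];
  [:: 2; 1; 1; 1; 2; 0; 2; 2; 0; 0; 0];
  [:: 1; 2; 1; 1; 0; 1; 1; 1; 0; 0; 0];
  [:: 1; 1; 2; 0; 2; 2; 1; 2; 0; 0; 0];
  [:: 2; 2; 0; 2; 1; 1; 2; 1; 0; 0; 0];
  [:: 1; 0; 1; 1; 2; 1; 1; 1; 0; 0; 0];
  [:: 0; 1; 2; 2; 2; 1; 2; 1; 0; 0; 0];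
  [:: 2; 1; 2; 2; 1; 2; 0; 0; 1; 0; 0];
  [:: 1; 2; 2; 2; 1; 0; 1; 0; 2; 0; 0];
  [:: 1; 2; 2; 1; 0; 2; 2; 0; 1; 0; 0];
  [:: 2; 1; 2; 0; 1; 2; 2; 0; 1; 0; 0];
  [:: 1; 2; 0; 1; 2; 2; 2; 0; 1; 0; 0];
  [:: 2; 0; 2; 1; 1; 1; 2; 0; 2; 0; 0];
  [:: 0; 2; 2; 1; 1; 1; 2; 0; 2; 0; 0];
  [:: 2; 2; 1; 2; 2; 0; 0; 1; 1; 0; 0];
  [:: 2; 2; 1; 2; 0; 2; 0; 1; 1; 0; 0];
  [:: 2; 1; 2; 0; 1; 2; 0; 2; 1; 0; 0];
  [:: 2; 2; 0; 1; 2; 1; 0; 2; 1; 0; 0];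
  [:: 2; 0; 2; 1; 2; 1; 0; 2; 1; 0; 0];
  [:: 0; 2; 1; 1; 1; 2; 0; 2; 2; 0; 0];
  [:: 1; 1; 2; 1; 0; 0; 2; 2; 2; 0; 0];
  [:: 2; 2; 1; 0; 1; 0; 1; 2; 2; 0; 0];
  [:: 2; 1; 0; 1; 1; 0; 1; 1; 1; 0; 0];
  [:: 1; 0; 2; 2; 2; 0; 2; 1; 1; 0; 0];
  [:: 0; 1; 2; 1; 1; 0; 1; 1; 1; 0; 0];
  [:: 2; 2; 2; 0; 0; 1; 1; 2; 1; 0; 0];
  [:: 2; 1; 0; 2; 0; 1; 1; 2; 2; 0; 0];
  [:: 1; 0; 1; 1; 0; 1; 1; 1; 2; 0; 0];
  [:: 0; 1; 1; 2; 0; 2; 2; 1; 2; 0; 0];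
  [:: 1; 1; 0; 0; 2; 2; 1; 2; 2; 0; 0];
  [:: 2; 0; 1; 0; 1; 2; 1; 2; 2; 0; 0];
  [:: 0; 2; 2; 0; 2; 1; 1; 2; 1; 0; 0];
  [:: 1; 0; 0; 2; 1; 2; 2; 1; 2; 0; 0];
  [:: 0; 1; 0; 1; 1; 2; 1; 1; 1; 0; 0];
  [:: 0; 0; 1; 2; 2; 2; 1; 2; 1; 0; 0];
  [:: 1; 1; 2; 1; 1; 1; 0; 0; 0; 1; 0];
  [:: 2; 1; 1; 1; 2; 0; 2; 0; 0; 2; 0];
  [:: 2; 1; 2; 1; 0; 2; 1; 0; 0; 2; 0];
  [:: 2; 2; 2; 0; 2; 1; 1; 0; 0; 1; 0];
  [:: 1; 1; 0; 1; 1; 1; 2; 0; 0; 1; 0];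
  [:: 1; 0; 1; 2; 1; 2; 2; 0; 0; 2; 0];
  [:: 0; 2; 1; 2; 2; 1; 2; 0; 0; 1; 0];
  [:: 1; 2; 1; 2; 2; 0; 0; 2; 0; 1; 0];
  [:: 2; 1; 1; 2; 0; 1; 0; 2; 0; 2; 0];
  [:: 1; 2; 2; 0; 2; 2; 0; 1; 0; 1; 0];
  [:: 1; 1; 0; 1; 1; 1; 0; 2; 0; 1; 0];
  [:: 2; 0; 2; 1; 1; 2; 0; 1; 0; 2; 0];
  [:: 0; 1; 2; 2; 2; 1; 0; 1; 0; 2; 0];
  [:: 1; 1; 2; 2; 0; 0; 2; 1; 0; 2; 0];
  [:: 2; 1; 2; 0; 1; 0; 2; 2; 0; 1; 0];
  [:: 1; 1; 0; 2; 2; 0; 2; 1; 0; 2; 0];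
  [:: 1; 0; 1; 2; 2; 0; 2; 2; 0; 1; 0];
  [:: 0; 1; 2; 2; 1; 0; 2; 2; 0; 1; 0];
  [:: 1; 2; 2; 0; 0; 2; 2; 1; 0; 1; 0];
  [:: 2; 2; 0; 1; 0; 2; 1; 2; 0; 1; 0];
  [:: 1; 0; 1; 1; 0; 1; 1; 1; 0; 2; 0];
  [:: 0; 2; 1; 2; 0; 1; 2; 2; 0; 1; 0];
  [:: 1; 1; 0; 0; 2; 2; 1; 2; 0; 2; 0];
  [:: 2; 0; 2; 0; 2; 1; 1; 2; 0; 1; 0];
  [:: 0; 1; 2; 0; 1; 2; 2; 2; 0; 1; 0];
  [:: 2; 0; 0; 1; 2; 2; 2; 1; 0; 1; 0];
  [:: 0; 2; 0; 2; 1; 1; 1; 2; 0; 2; 0];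
  [:: 0; 0; 2; 2; 1; 1; 1; 2; 0; 2; 0];
  [:: 2; 1; 1; 2; 1; 0; 0; 0; 2; 2; 0];
  [:: 1; 2; 2; 2; 0; 1; 0; 0; 1; 2; 0];
  [:: 1; 2; 1; 0; 2; 1; 0; 0; 2; 2; 0];
  [:: 1; 1; 0; 1; 1; 1; 0; 0; 2; 1; 0];
  [:: 2; 0; 1; 1; 2; 2; 0; 0; 2; 1; 0];
  [:: 0; 2; 2; 1; 2; 2; 0; 0; 1; 1; 0];
  [:: 1; 1; 1; 2; 0; 0; 1; 0; 1; 1; 0];
  [:: 1; 1; 1; 0; 2; 0; 1; 0; 1; 1; 0];
  [:: 2; 2; 0; 2; 1; 0; 2; 0; 1; 1; 0];
  [:: 1; 0; 2; 1; 2; 0; 1; 0; 2; 2; 0];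
  [:: 0; 2; 2; 1; 2; 0; 2; 0; 1; 1; 0];
  [:: 1; 1; 1; 0; 0; 2; 1; 0; 1; 1; 0];
  [:: 2; 1; 0; 2; 0; 1; 1; 0; 2; 2; 0];
  [:: 2; 0; 1; 1; 0; 2; 2; 0; 2; 1; 0];
  [:: 0; 2; 1; 2; 0; 1; 2; 0; 2; 1; 0];
  [:: 2; 1; 0; 0; 2; 1; 2; 0; 1; 2; 0];
  [:: 1; 0; 1; 0; 1; 2; 2; 0; 2; 2; 0];
  [:: 0; 2; 2; 0; 1; 2; 1; 0; 2; 1; 0];
  [:: 1; 0; 0; 1; 2; 2; 1; 0; 2; 2; 0];
  [:: 0; 2; 0; 2; 1; 2; 1; 0; 2; 1; 0];
  [:: 0; 0; 2; 1; 1; 1; 2; 0; 2; 2; 0];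
  [:: 2; 2; 1; 2; 0; 0; 0; 1; 1; 2; 0];
  [:: 1; 2; 2; 0; 1; 0; 0; 2; 1; 2; 0];
  [:: 1; 2; 0; 2; 1; 0; 0; 2; 1; 2; 0];
  [:: 1; 0; 1; 2; 2; 0; 0; 2; 2; 1; 0];
  [:: 0; 1; 1; 2; 1; 0; 0; 2; 2; 2; 0];
  [:: 2; 1; 1; 0; 0; 1; 0; 2; 2; 2; 0];
  [:: 2; 2; 0; 1; 0; 1; 0; 1; 2; 2; 0];
  [:: 1; 0; 2; 2; 0; 1; 0; 2; 1; 2; 0];
  [:: 0; 2; 2; 1; 0; 1; 0; 1; 2; 2; 0];
  [:: 2; 1; 0; 0; 2; 2; 0; 1; 2; 1; 0];
  [:: 2; 0; 1; 0; 1; 1; 0; 1; 1; 1; 0];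
  [:: 0; 2; 1; 0; 1; 1; 0; 1; 1; 1; 0];
  [:: 1; 0; 0; 2; 1; 2; 0; 1; 2; 2; 0];
  [:: 0; 1; 0; 2; 2; 2; 0; 2; 1; 1; 0];
  [:: 0; 0; 1; 2; 1; 1; 0; 1; 1; 1; 0];
  [:: 1; 1; 1; 0; 0; 0; 1; 2; 1; 1; 0];
  [:: 2; 2; 0; 1; 0; 0; 1; 2; 2; 1; 0];
  [:: 2; 0; 1; 1; 0; 0; 2; 2; 1; 2; 0];
  [:: 0; 2; 2; 2; 0; 0; 1; 1; 2; 1; 0];
  [:: 2; 1; 0; 0; 2; 0; 2; 1; 2; 1; 0];
  [:: 1; 0; 2; 0; 2; 0; 2; 1; 1; 2; 0];
  [:: 0; 2; 1; 0; 2; 0; 1; 1; 2; 2; 0];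
  [:: 1; 0; 0; 1; 2; 0; 1; 2; 2; 2; 0];
  [:: 0; 1; 0; 1; 1; 0; 1; 1; 1; 2; 0];
  [:: 0; 0; 1; 1; 2; 0; 2; 2; 1; 2; 0];
  [:: 2; 2; 0; 0; 0; 2; 1; 1; 1; 2; 0];
  [:: 1; 0; 2; 0; 0; 1; 2; 2; 2; 1; 0];
  [:: 0; 1; 1; 0; 0; 2; 2; 1; 2; 2; 0];
  [:: 2; 0; 0; 2; 0; 2; 1; 1; 1; 2; 0];
  [:: 0; 2; 0; 1; 0; 1; 2; 1; 2; 2; 0];
  [:: 0; 0; 2; 2; 0; 2; 1; 1; 2; 1; 0];
  [:: 2; 0; 0; 0; 2; 2; 1; 1; 1; 2; 0];
  [:: 0; 1; 0; 0; 2; 1; 2; 2; 1; 2; 0];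
  [:: 0; 0; 1; 0; 1; 1; 2; 1; 1; 1; 0];
  [:: 0; 0; 0; 1; 2; 2; 2; 1; 2; 1; 0];
  [:: 2; 2; 2; 1; 2; 1; 0; 0; 0; 0; 1];
  [:: 2; 1; 1; 1; 2; 0; 2; 0; 0; 0; 2];
  [:: 1; 1; 1; 2; 0; 2; 2; 0; 0; 0; 2];
  [:: 2; 1; 1; 0; 1; 1; 1; 0; 0; 0; 1];
  [:: 1; 2; 0; 2; 2; 1; 2; 0; 0; 0; 1];
  [:: 2; 0; 2; 1; 1; 2; 1; 0; 0; 0; 2];
  [:: 0; 1; 1; 2; 1; 1; 1; 0; 0; 0; 1];
  [:: 1; 2; 2; 1; 2; 0; 0; 1; 0; 0; 2];
  [:: 2; 2; 2; 1; 0; 1; 0; 2; 0; 0; 1];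
  [:: 2; 2; 1; 0; 2; 2; 0; 1; 0; 0; 1];
  [:: 1; 2; 0; 1; 2; 2; 0; 1; 0; 0; 2];
  [:: 2; 0; 1; 2; 2; 2; 0; 1; 0; 0; 1];
  [:: 0; 2; 1; 1; 1; 2; 0; 2; 0; 0; 2];
  [:: 2; 1; 2; 2; 0; 0; 1; 1; 0; 0; 2];
  [:: 2; 1; 2; 0; 2; 0; 1; 1; 0; 0; 2];
  [:: 1; 2; 0; 1; 2; 0; 2; 1; 0; 0; 2];
  [:: 2; 0; 1; 2; 1; 0; 2; 1; 0; 0; 2];
  [:: 0; 2; 1; 2; 1; 0; 2; 1; 0; 0; 2];
  [:: 1; 2; 1; 0; 0; 2; 2; 2; 0; 0; 1];
  [:: 2; 1; 0; 1; 0; 1; 2; 2; 0; 0; 2];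
  [:: 1; 0; 1; 1; 0; 1; 1; 1; 0; 0; 2];
  [:: 0; 2; 2; 2; 0; 2; 1; 1; 0; 0; 1];
  [:: 2; 2; 0; 0; 1; 1; 2; 1; 0; 0; 2];
  [:: 1; 0; 2; 0; 1; 1; 2; 2; 0; 0; 2];
  [:: 0; 1; 1; 0; 1; 1; 1; 2; 0; 0; 1];
  [:: 1; 0; 0; 2; 2; 1; 2; 2; 0; 0; 1];
  [:: 0; 1; 0; 1; 2; 1; 2; 2; 0; 0; 2];
  [:: 0; 0; 2; 1; 2; 2; 1; 2; 0; 0; 1];
  [:: 1; 2; 1; 1; 1; 0; 0; 0; 1; 0; 1];
  [:: 1; 1; 1; 2; 0; 2; 0; 0; 2; 0; 2];
  [:: 1; 2; 1; 0; 2; 1; 0; 0; 2; 0; 2];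
  [:: 2; 2; 0; 2; 1; 1; 0; 0; 1; 0; 2];
  [:: 1; 0; 1; 1; 1; 2; 0; 0; 1; 0; 1];
  [:: 0; 1; 2; 1; 2; 2; 0; 0; 2; 0; 1];
  [:: 2; 1; 2; 2; 0; 0; 2; 0; 1; 0; 1];
  [:: 1; 1; 2; 0; 1; 0; 2; 0; 2; 0; 2];
  [:: 2; 2; 0; 2; 2; 0; 1; 0; 1; 0; 1];
  [:: 1; 0; 1; 1; 1; 0; 2; 0; 1; 0; 1];
  [:: 0; 2; 1; 1; 2; 0; 1; 0; 2; 0; 2];
  [:: 1; 2; 2; 0; 0; 2; 1; 0; 2; 0; 1];
  [:: 1; 2; 0; 1; 0; 2; 2; 0; 1; 0; 2];
  [:: 1; 0; 2; 2; 0; 2; 1; 0; 2; 0; 1];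
  [:: 0; 1; 2; 2; 0; 2; 2; 0; 1; 0; 1];
  [:: 2; 2; 0; 0; 2; 2; 1; 0; 1; 0; 1];
  [:: 2; 0; 1; 0; 2; 1; 2; 0; 1; 0; 2];
  [:: 0; 1; 1; 0; 1; 1; 1; 0; 2; 0; 1];
  [:: 1; 0; 0; 2; 2; 1; 2; 0; 2; 0; 1];
  [:: 0; 2; 0; 2; 1; 1; 2; 0; 1; 0; 2];
  [:: 0; 0; 1; 2; 2; 2; 1; 0; 1; 0; 2];
  [:: 1; 1; 2; 1; 0; 0; 0; 2; 2; 0; 2];
  [:: 2; 2; 2; 0; 1; 0; 0; 1; 2; 0; 1];
  [:: 2; 1; 0; 2; 1; 0; 0; 2; 2; 0; 1];
  [:: 1; 0; 1; 1; 1; 0; 0; 2; 1; 0; 1];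
  [:: 0; 1; 1; 2; 2; 0; 0; 2; 1; 0; 2];
  [:: 1; 1; 2; 0; 0; 1; 0; 1; 1; 0; 1];
  [:: 1; 1; 0; 2; 0; 1; 0; 1; 1; 0; 1];
  [:: 2; 0; 2; 1; 0; 2; 0; 1; 1; 0; 2];
  [:: 0; 2; 1; 2; 0; 1; 0; 2; 2; 0; 1];
  [:: 1; 1; 0; 0; 2; 1; 0; 1; 1; 0; 1];
  [:: 1; 0; 2; 0; 1; 1; 0; 2; 2; 0; 2];
  [:: 0; 1; 1; 0; 2; 2; 0; 2; 1; 0; 2];
  [:: 1; 0; 0; 2; 1; 2; 0; 1; 2; 0; 2];
  [:: 0; 1; 0; 1; 2; 2; 0; 2; 2; 0; 1];
  [:: 0; 0; 1; 2; 2; 1; 0; 2; 2; 0; 1];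
  [:: 2; 1; 2; 0; 0; 0; 1; 1; 2; 0; 2];
  [:: 2; 2; 0; 1; 0; 0; 2; 1; 2; 0; 1];
  [:: 2; 0; 2; 1; 0; 0; 2; 1; 2; 0; 1];
  [:: 0; 1; 2; 2; 0; 0; 2; 2; 1; 0; 1];
  [:: 1; 1; 0; 0; 1; 0; 2; 2; 2; 0; 2];
  [:: 2; 0; 1; 0; 1; 0; 1; 2; 2; 0; 2];
  [:: 0; 2; 2; 0; 1; 0; 2; 1; 2; 0; 1];
  [:: 1; 0; 0; 2; 2; 0; 1; 2; 1; 0; 2];
  [:: 0; 1; 0; 1; 1; 0; 1; 1; 1; 0; 2];
  [:: 0; 0; 2; 1; 2; 0; 1; 2; 2; 0; 1];
  [:: 1; 1; 0; 0; 0; 1; 2; 1; 1; 0; 1];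
  [:: 2; 0; 1; 0; 0; 1; 2; 2; 1; 0; 2];
  [:: 0; 1; 1; 0; 0; 2; 2; 1; 2; 0; 2];
  [:: 1; 0; 0; 2; 0; 2; 1; 2; 1; 0; 2];
  [:: 0; 2; 0; 2; 0; 2; 1; 1; 2; 0; 1];
  [:: 0; 0; 1; 2; 0; 1; 2; 2; 2; 0; 1];
  [:: 2; 0; 0; 0; 2; 1; 1; 1; 2; 0; 2];
  [:: 0; 2; 0; 0; 1; 2; 2; 2; 1; 0; 1];
  [:: 0; 0; 2; 0; 2; 1; 1; 1; 2; 0; 2];
  [:: 0; 0; 0; 2; 2; 1; 1; 1; 2; 0; 2];
  [:: 2; 2; 1; 2; 1; 0; 0; 0; 0; 1; 2];
  [:: 1; 1; 1; 2; 0; 2; 0; 0; 0; 2; 2];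
  [:: 1; 1; 2; 0; 2; 2; 0; 0; 0; 2; 1];
  [:: 1; 1; 0; 1; 1; 1; 0; 0; 0; 1; 2];
  [:: 2; 0; 2; 2; 1; 2; 0; 0; 0; 1; 1];
  [:: 0; 2; 1; 1; 2; 1; 0; 0; 0; 2; 2];
  [:: 2; 2; 1; 2; 0; 0; 1; 0; 0; 2; 1];
  [:: 2; 2; 1; 0; 1; 0; 2; 0; 0; 1; 2];
  [:: 2; 1; 0; 2; 2; 0; 1; 0; 0; 1; 2];
  [:: 2; 0; 1; 2; 2; 0; 1; 0; 0; 2; 1];
  [:: 0; 1; 2; 2; 2; 0; 1; 0; 0; 1; 2];
  [:: 1; 2; 2; 0; 0; 1; 1; 0; 0; 2; 2];
  [:: 1; 2; 0; 2; 0; 1; 1; 0; 0; 2; 2];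
  [:: 2; 0; 1; 2; 0; 2; 1; 0; 0; 2; 1];
  [:: 0; 1; 2; 1; 0; 2; 1; 0; 0; 2; 2];
  [:: 2; 1; 0; 0; 2; 2; 2; 0; 0; 1; 1];
  [:: 1; 0; 1; 0; 1; 2; 2; 0; 0; 2; 2];
  [:: 0; 1; 1; 0; 1; 1; 1; 0; 0; 2; 1];
  [:: 2; 0; 0; 1; 1; 2; 1; 0; 0; 2; 2];
  [:: 0; 2; 0; 1; 1; 2; 2; 0; 0; 2; 1];
  [:: 0; 0; 2; 2; 1; 2; 2; 0; 0; 1; 1];
  [:: 2; 1; 1; 1; 0; 0; 0; 1; 0; 1; 1];
  [:: 1; 1; 2; 0; 2; 0; 0; 2; 0; 2; 1];
  [:: 2; 1; 0; 2; 1; 0; 0; 2; 0; 2; 1];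
  [:: 2; 0; 2; 1; 1; 0; 0; 1; 0; 2; 2];
  [:: 0; 1; 1; 1; 2; 0; 0; 1; 0; 1; 1];
  [:: 1; 2; 2; 0; 0; 2; 0; 1; 0; 1; 2];
  [:: 1; 2; 0; 1; 0; 2; 0; 2; 0; 2; 1];
  [:: 2; 0; 2; 2; 0; 1; 0; 1; 0; 1; 2];
  [:: 0; 1; 1; 1; 0; 2; 0; 1; 0; 1; 1];
  [:: 2; 2; 0; 0; 2; 1; 0; 2; 0; 1; 1];
  [:: 2; 0; 1; 0; 2; 2; 0; 1; 0; 2; 1];
  [:: 0; 2; 2; 0; 2; 1; 0; 2; 0; 1; 1];
  [:: 2; 0; 0; 2; 2; 1; 0; 1; 0; 1; 2];
  [:: 0; 1; 0; 2; 1; 2; 0; 1; 0; 2; 2];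
  [:: 0; 0; 2; 2; 1; 2; 0; 2; 0; 1; 1];
  [:: 1; 2; 1; 0; 0; 0; 2; 2; 0; 2; 1];
  [:: 2; 2; 0; 1; 0; 0; 1; 2; 0; 1; 2];
  [:: 1; 0; 2; 1; 0; 0; 2; 2; 0; 1; 2];
  [:: 0; 1; 1; 1; 0; 0; 2; 1; 0; 1; 1];
  [:: 1; 2; 0; 0; 1; 0; 1; 1; 0; 1; 1];
  [:: 1; 0; 2; 0; 1; 0; 1; 1; 0; 1; 1];
  [:: 0; 2; 1; 0; 2; 0; 1; 1; 0; 2; 2];
  [:: 1; 0; 0; 2; 1; 0; 1; 1; 0; 1; 1];
  [:: 0; 2; 0; 1; 1; 0; 2; 2; 0; 2; 1];
  [:: 0; 0; 2; 1; 2; 0; 1; 2; 0; 2; 1];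
  [:: 1; 2; 0; 0; 0; 1; 1; 2; 0; 2; 2];
  [:: 2; 0; 1; 0; 0; 2; 1; 2; 0; 1; 2];
  [:: 0; 2; 1; 0; 0; 2; 1; 2; 0; 1; 2];
  [:: 1; 0; 0; 1; 0; 2; 2; 2; 0; 2; 1];
  [:: 0; 1; 0; 1; 0; 1; 2; 2; 0; 2; 2];
  [:: 0; 0; 2; 2; 0; 1; 2; 1; 0; 2; 1];
  [:: 1; 0; 0; 0; 1; 2; 1; 1; 0; 1; 1];
  [:: 0; 1; 0; 0; 1; 2; 2; 1; 0; 2; 2];
  [:: 0; 0; 2; 0; 2; 1; 2; 1; 0; 2; 1];
  [:: 0; 0; 0; 2; 1; 1; 1; 2; 0; 2; 2];
  [:: 2; 1; 2; 1; 0; 0; 0; 0; 1; 2; 2];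
  [:: 1; 1; 2; 0; 2; 0; 0; 0; 2; 2; 1];
  [:: 1; 2; 0; 2; 2; 0; 0; 0; 2; 1; 1];
  [:: 1; 0; 1; 1; 1; 0; 0; 0; 1; 2; 1];
  [:: 0; 2; 2; 1; 2; 0; 0; 0; 1; 1; 2];
  [:: 2; 1; 2; 0; 0; 1; 0; 0; 2; 1; 2];
  [:: 2; 1; 0; 1; 0; 2; 0; 0; 1; 2; 2];
  [:: 1; 0; 2; 2; 0; 1; 0; 0; 1; 2; 2];
  [:: 0; 1; 2; 2; 0; 1; 0; 0; 2; 1; 2];
  [:: 2; 2; 0; 0; 1; 1; 0; 0; 2; 2; 1];
  [:: 2; 0; 2; 0; 1; 1; 0; 0; 2; 2; 1];
  [:: 0; 1; 2; 0; 2; 1; 0; 0; 2; 1; 2];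
  [:: 1; 0; 0; 2; 2; 2; 0; 0; 1; 1; 2];
  [:: 0; 1; 0; 1; 2; 2; 0; 0; 2; 2; 1];
  [:: 0; 0; 1; 1; 2; 1; 0; 0; 2; 2; 2];
  [:: 1; 1; 1; 0; 0; 0; 1; 0; 1; 1; 2];
  [:: 1; 2; 0; 2; 0; 0; 2; 0; 2; 1; 1];
  [:: 1; 0; 2; 1; 0; 0; 2; 0; 2; 1; 2];
  [:: 0; 2; 1; 1; 0; 0; 1; 0; 2; 2; 2];
  [:: 2; 2; 0; 0; 2; 0; 1; 0; 1; 2; 1];
  [:: 2; 0; 1; 0; 2; 0; 2; 0; 2; 1; 1];
  [:: 0; 2; 2; 0; 1; 0; 1; 0; 1; 2; 2];
  [:: 2; 0; 0; 2; 1; 0; 2; 0; 1; 1; 2];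
  [:: 0; 1; 0; 2; 2; 0; 1; 0; 2; 1; 2];
  [:: 0; 0; 2; 2; 1; 0; 1; 0; 1; 2; 2];
  [:: 2; 1; 0; 0; 0; 2; 2; 0; 2; 1; 1];
  [:: 2; 0; 1; 0; 0; 1; 2; 0; 1; 2; 2];
  [:: 0; 2; 1; 0; 0; 2; 2; 0; 1; 2; 1];
  [:: 2; 0; 0; 1; 0; 1; 1; 0; 1; 1; 1];
  [:: 0; 2; 0; 1; 0; 1; 1; 0; 1; 1; 1];
  [:: 0; 0; 2; 1; 0; 1; 1; 0; 1; 1; 1];
  [:: 2; 0; 0; 0; 1; 1; 2; 0; 2; 2; 1];
  [:: 0; 1; 0; 0; 2; 1; 2; 0; 1; 2; 2];
  [:: 0; 0; 1; 0; 2; 2; 2; 0; 2; 1; 1];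
  [:: 0; 0; 0; 1; 2; 1; 1; 0; 1; 1; 1];
  [:: 1; 2; 1; 0; 0; 0; 0; 1; 2; 2; 2];
  [:: 1; 2; 0; 2; 0; 0; 0; 2; 2; 1; 1];
  [:: 2; 0; 2; 2; 0; 0; 0; 2; 1; 1; 1];
  [:: 0; 1; 1; 1; 0; 0; 0; 1; 2; 1; 1];
  [:: 1; 2; 0; 0; 1; 0; 0; 2; 1; 2; 2];
  [:: 1; 0; 1; 0; 2; 0; 0; 1; 2; 2; 2];
  [:: 0; 2; 2; 0; 1; 0; 0; 1; 2; 2; 1];
  [:: 2; 0; 0; 1; 1; 0; 0; 2; 2; 1; 2];
  [:: 0; 2; 0; 1; 1; 0; 0; 2; 2; 1; 2];
  [:: 0; 0; 2; 2; 2; 0; 0; 1; 1; 2; 1];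
  [:: 1; 1; 0; 0; 0; 1; 0; 1; 1; 2; 1];
  [:: 2; 0; 2; 0; 0; 2; 0; 2; 1; 1; 1];
  [:: 0; 2; 1; 0; 0; 2; 0; 2; 1; 2; 1];
  [:: 2; 0; 0; 2; 0; 1; 0; 1; 2; 1; 2];
  [:: 0; 1; 0; 2; 0; 2; 0; 2; 1; 1; 2];
  [:: 0; 0; 2; 1; 0; 2; 0; 1; 1; 2; 2];
  [:: 1; 0; 0; 0; 2; 2; 0; 2; 1; 1; 2];
  [:: 0; 1; 0; 0; 1; 2; 0; 1; 2; 2; 2];
  [:: 0; 0; 1; 0; 1; 1; 0; 1; 1; 1; 2];
  [:: 0; 0; 0; 1; 1; 2; 0; 2; 2; 1; 2];
  [:: 2; 1; 0; 0; 0; 0; 1; 2; 2; 2; 1];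
  [:: 2; 0; 2; 0; 0; 0; 2; 2; 1; 1; 1];
  [:: 0; 2; 2; 0; 0; 0; 2; 1; 1; 1; 2];
  [:: 2; 0; 0; 1; 0; 0; 2; 1; 2; 2; 1];
  [:: 0; 1; 0; 2; 0; 0; 1; 2; 2; 2; 1];
  [:: 0; 0; 1; 1; 0; 0; 2; 2; 1; 2; 2];
  [:: 1; 0; 0; 0; 1; 0; 1; 1; 2; 1; 1];
  [:: 0; 2; 0; 0; 2; 0; 2; 1; 1; 1; 2];
  [:: 0; 0; 2; 0; 1; 0; 1; 2; 1; 2; 2];
  [:: 0; 0; 0; 2; 2; 0; 2; 1; 1; 2; 1];
  [:: 1; 0; 0; 0; 0; 1; 2; 2; 2; 1; 2];
  [:: 0; 2; 0; 0; 0; 2; 2; 1; 1; 1; 2];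
  [:: 0; 0; 1; 0; 0; 2; 1; 2; 2; 1; 2];
  [:: 0; 0; 0; 1; 0; 1; 1; 2; 1; 1; 1];
  [:: 0; 0; 0; 0; 1; 2; 2; 2; 1; 2; 1]].

Definition witness_11_6 : seq (seq nat) := [::
  [:: 1; 1; 2; 1; 2; 2; 0; 0; 0; 0; 0];
  [:: 1; 2; 2; 2; 1; 0; 1; 0; 0; 0; 0];
  [:: 1; 1; 2; 1; 0; 1; 2; 0; 0; 0; 0];
  [:: 1; 1; 2; 0; 1; 1; 2; 0; 0; 0; 0];
  [:: 1; 1; 0; 2; 1; 2; 2; 0; 0; 0; 0];
  [:: 2; 0; 1; 2; 1; 1; 2; 0; 0; 0; 0];
  [:: 0; 1; 1; 2; 1; 2; 2; 0; 0; 0; 0];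
  [:: 2; 2; 2; 1; 2; 0; 0; 2; 0; 0; 0];
  [:: 1; 2; 1; 2; 0; 1; 0; 2; 0; 0; 0];
  [:: 1; 1; 1; 0; 1; 2; 0; 1; 0; 0; 0];
  [:: 2; 1; 0; 1; 1; 2; 0; 1; 0; 0; 0];
  [:: 2; 0; 1; 2; 1; 1; 0; 1; 0; 0; 0];
  [:: 0; 1; 2; 2; 2; 1; 0; 1; 0; 0; 0];
  [:: 2; 1; 1; 2; 0; 0; 1; 2; 0; 0; 0];
  [:: 2; 2; 2; 0; 2; 0; 1; 2; 0; 0; 0];
  [:: 1; 1; 0; 1; 1; 0; 2; 2; 0; 0; 0];
  [:: 2; 0; 1; 2; 2; 0; 1; 1; 0; 0; 0];
  [:: 0; 1; 1; 2; 1; 0; 1; 2; 0; 0; 0];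
  [:: 2; 2; 1; 0; 0; 2; 1; 1; 0; 0; 0];
  [:: 2; 1; 0; 1; 0; 2; 1; 1; 0; 0; 0];
  [:: 1; 0; 1; 1; 0; 1; 1; 1; 0; 0; 0];
  [:: 0; 1; 1; 2; 0; 1; 1; 2; 0; 0; 0];
  [:: 2; 2; 0; 0; 1; 1; 2; 1; 0; 0; 0];
  [:: 1; 0; 2; 0; 1; 2; 1; 1; 0; 0; 0];
  [:: 0; 1; 1; 0; 2; 1; 2; 2; 0; 0; 0];
  [:: 1; 0; 0; 1; 1; 1; 2; 2; 0; 0; 0];
  [:: 0; 2; 0; 1; 2; 1; 1; 2; 0; 0; 0];
  [:: 0; 0; 1; 1; 2; 1; 2; 2; 0; 0; 0];
  [:: 1; 1; 1; 2; 2; 0; 0; 0; 1; 0; 0];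
  [:: 1; 2; 2; 2; 0; 2; 0; 0; 2; 0; 0];
  [:: 1; 2; 1; 0; 2; 1; 0; 0; 2; 0; 0];
  [:: 1; 1; 0; 2; 2; 2; 0; 0; 1; 0; 0];
  [:: 2; 0; 1; 2; 1; 1; 0; 0; 1; 0; 0];
  [:: 0; 2; 2; 2; 1; 2; 0; 0; 2; 0; 0];
  [:: 2; 1; 2; 1; 0; 0; 1; 0; 1; 0; 0];
  [:: 2; 2; 1; 0; 1; 0; 2; 0; 1; 0; 0];
  [:: 1; 1; 0; 2; 2; 0; 1; 0; 1; 0; 0];
  [:: 2; 0; 2; 1; 1; 0; 1; 0; 1; 0; 0];
  [:: 0; 1; 2; 1; 2; 0; 1; 0; 2; 0; 0];
  [:: 2; 2; 1; 0; 0; 2; 1; 0; 1; 0; 0];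
  [:: 2; 1; 0; 2; 0; 1; 1; 0; 2; 0; 0];
  [:: 1; 0; 1; 2; 0; 1; 2; 0; 2; 0; 0];
  [:: 0; 1; 1; 1; 0; 1; 2; 0; 1; 0; 0];
  [:: 2; 1; 0; 0; 2; 2; 2; 0; 2; 0; 0];
  [:: 2; 0; 1; 0; 2; 2; 2; 0; 2; 0; 0];
  [:: 0; 2; 1; 0; 1; 1; 2; 0; 1; 0; 0];
  [:: 2; 0; 0; 1; 2; 2; 2; 0; 2; 0; 0];
  [:: 0; 2; 0; 1; 2; 1; 1; 0; 1; 0; 0];
  [:: 0; 0; 1; 2; 2; 2; 1; 0; 1; 0; 0];
  [:: 1; 1; 2; 1; 0; 0; 0; 2; 2; 0; 0];
  [:: 2; 2; 2; 0; 2; 0; 0; 2; 1; 0; 0];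
  [:: 2; 2; 0; 1; 1; 0; 0; 1; 2; 0; 0];
  [:: 1; 0; 1; 1; 2; 0; 0; 1; 2; 0; 0];
  [:: 0; 2; 1; 1; 2; 0; 0; 1; 2; 0; 0];
  [:: 1; 1; 1; 0; 0; 2; 0; 2; 1; 0; 0];
  [:: 2; 1; 0; 1; 0; 2; 0; 1; 1; 0; 0];
  [:: 1; 0; 1; 2; 0; 2; 0; 2; 1; 0; 0];
  [:: 0; 2; 2; 2; 0; 2; 0; 1; 2; 0; 0];
  [:: 1; 2; 0; 0; 2; 2; 0; 1; 1; 0; 0];
  [:: 2; 0; 2; 0; 1; 1; 0; 1; 2; 0; 0];
  [:: 0; 1; 1; 0; 1; 1; 0; 2; 2; 0; 0];
  [:: 2; 0; 0; 1; 2; 1; 0; 2; 1; 0; 0];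
  [:: 0; 2; 0; 1; 2; 2; 0; 1; 1; 0; 0];
  [:: 0; 0; 1; 1; 2; 1; 0; 1; 2; 0; 0];
  [:: 2; 1; 1; 0; 0; 0; 2; 2; 1; 0; 0];
  [:: 2; 1; 0; 1; 0; 0; 2; 2; 1; 0; 0];
  [:: 2; 0; 2; 1; 0; 0; 1; 1; 1; 0; 0];
  [:: 0; 2; 2; 1; 0; 0; 2; 1; 1; 0; 0];
  [:: 1; 2; 0; 0; 1; 0; 1; 1; 2; 0; 0];
  [:: 1; 0; 2; 0; 2; 0; 2; 1; 1; 0; 0];
  [:: 0; 2; 1; 0; 1; 0; 2; 1; 1; 0; 0];
  [:: 1; 0; 0; 1; 1; 0; 2; 2; 2; 0; 0];
  [:: 0; 1; 0; 1; 1; 0; 1; 1; 1; 0; 0];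
  [:: 0; 0; 1; 1; 2; 0; 1; 1; 2; 0; 0];
  [:: 1; 2; 0; 0; 0; 2; 1; 1; 2; 0; 0];
  [:: 1; 0; 1; 0; 0; 2; 1; 2; 1; 0; 0];
  [:: 0; 2; 2; 0; 0; 1; 1; 2; 1; 0; 0];
  [:: 1; 0; 0; 2; 0; 1; 2; 1; 1; 0; 0];
  [:: 0; 1; 0; 2; 0; 1; 2; 1; 1; 0; 0];
  [:: 0; 0; 1; 1; 0; 2; 1; 2; 2; 0; 0];
  [:: 2; 0; 0; 0; 2; 2; 2; 1; 2; 0; 0];
  [:: 0; 1; 0; 0; 1; 1; 1; 2; 2; 0; 0];
  [:: 0; 0; 2; 0; 1; 2; 1; 1; 2; 0; 0];
  [:: 0; 0; 0; 1; 1; 2; 1; 2; 2; 0; 0];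
  [:: 1; 2; 1; 1; 2; 0; 0; 0; 0; 2; 0];
  [:: 1; 2; 1; 1; 0; 1; 0; 0; 0; 2; 0];
  [:: 1; 2; 2; 0; 1; 1; 0; 0; 0; 2; 0];
  [:: 1; 1; 0; 1; 1; 1; 0; 0; 0; 1; 0];
  [:: 2; 0; 1; 2; 1; 1; 0; 0; 0; 1; 0];
  [:: 0; 1; 1; 1; 2; 2; 0; 0; 0; 1; 0];
  [:: 1; 2; 1; 1; 0; 0; 1; 0; 0; 2; 0];
  [:: 2; 1; 1; 0; 1; 0; 1; 0; 0; 2; 0];
  [:: 1; 2; 0; 1; 2; 0; 2; 0; 0; 1; 0];
  [:: 1; 0; 2; 2; 2; 0; 2; 0; 0; 2; 0];
  [:: 0; 1; 2; 2; 2; 0; 2; 0; 0; 2; 0];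
  [:: 1; 1; 2; 0; 0; 1; 2; 0; 0; 1; 0];
  [:: 1; 2; 0; 2; 0; 2; 1; 0; 0; 1; 0];
  [:: 2; 0; 1; 1; 0; 1; 2; 0; 0; 2; 0];
  [:: 0; 1; 2; 1; 0; 2; 1; 0; 0; 2; 0];
  [:: 2; 1; 0; 0; 1; 1; 1; 0; 0; 2; 0];
  [:: 2; 0; 2; 0; 2; 1; 1; 0; 0; 1; 0];
  [:: 0; 1; 1; 0; 2; 2; 2; 0; 0; 1; 0];
  [:: 1; 0; 0; 2; 1; 2; 1; 0; 0; 1; 0];
  [:: 0; 2; 0; 1; 2; 1; 1; 0; 0; 1; 0];
  [:: 0; 0; 2; 2; 2; 1; 2; 0; 0; 2; 0];
  [:: 1; 2; 1; 1; 0; 0; 0; 1; 0; 2; 0];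
  [:: 2; 2; 2; 0; 2; 0; 0; 2; 0; 1; 0];
  [:: 1; 1; 0; 1; 2; 0; 0; 2; 0; 2; 0];
  [:: 2; 0; 2; 1; 1; 0; 0; 1; 0; 2; 0];
  [:: 0; 2; 1; 2; 1; 0; 0; 1; 0; 1; 0];
  [:: 2; 1; 1; 0; 0; 1; 0; 2; 0; 2; 0];
  [:: 1; 2; 0; 2; 0; 1; 0; 2; 0; 1; 0];
  [:: 1; 0; 1; 2; 0; 2; 0; 1; 0; 2; 0];
  [:: 0; 2; 2; 1; 0; 1; 0; 2; 0; 1; 0];
  [:: 1; 1; 0; 0; 2; 1; 0; 1; 0; 2; 0];
  [:: 2; 0; 1; 0; 1; 2; 0; 2; 0; 1; 0];
  [:: 0; 1; 1; 0; 2; 2; 0; 1; 0; 1; 0];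
  [:: 1; 0; 0; 2; 2; 1; 0; 1; 0; 2; 0];
  [:: 0; 2; 0; 2; 1; 1; 0; 1; 0; 1; 0];
  [:: 0; 0; 1; 2; 1; 2; 0; 1; 0; 2; 0];
  [:: 2; 1; 1; 0; 0; 0; 2; 1; 0; 1; 0];
  [:: 1; 1; 0; 2; 0; 0; 2; 1; 0; 2; 0];
  [:: 2; 0; 1; 1; 0; 0; 2; 1; 0; 1; 0];
  [:: 0; 2; 2; 1; 0; 0; 2; 1; 0; 1; 0];
  [:: 2; 1; 0; 0; 1; 0; 1; 2; 0; 2; 0];
  [:: 1; 0; 2; 0; 1; 0; 1; 2; 0; 2; 0];
  [:: 0; 2; 1; 0; 2; 0; 1; 1; 0; 2; 0];
  [:: 1; 0; 0; 1; 1; 0; 2; 2; 0; 1; 0];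
  [:: 0; 1; 0; 1; 2; 0; 1; 2; 0; 2; 0];
  [:: 0; 0; 1; 1; 1; 0; 1; 2; 0; 1; 0];
  [:: 1; 2; 0; 0; 0; 2; 2; 2; 0; 2; 0];
  [:: 2; 0; 1; 0; 0; 2; 2; 1; 0; 1; 0];
  [:: 0; 2; 1; 0; 0; 2; 2; 2; 0; 2; 0];
  [:: 1; 0; 0; 2; 0; 2; 1; 1; 0; 1; 0];
  [:: 0; 2; 0; 1; 0; 2; 2; 2; 0; 2; 0];
  [:: 0; 0; 2; 1; 0; 1; 1; 2; 0; 1; 0];
  [:: 2; 0; 0; 0; 1; 2; 1; 2; 0; 1; 0];
  [:: 0; 2; 0; 0; 1; 2; 2; 2; 0; 2; 0];
  [:: 0; 0; 2; 0; 1; 2; 1; 1; 0; 1; 0];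
  [:: 0; 0; 0; 1; 2; 2; 2; 1; 0; 1; 0];
  [:: 2; 1; 2; 2; 0; 0; 0; 0; 1; 1; 0];
  [:: 1; 1; 2; 0; 1; 0; 0; 0; 2; 1; 0];
  [:: 1; 1; 0; 2; 2; 0; 0; 0; 1; 1; 0];
  [:: 1; 0; 2; 1; 1; 0; 0; 0; 2; 1; 0];
  [:: 0; 1; 1; 2; 1; 0; 0; 0; 2; 2; 0];
  [:: 2; 2; 2; 0; 0; 1; 0; 0; 1; 1; 0];
  [:: 2; 2; 0; 1; 0; 1; 0; 0; 1; 1; 0];
  [:: 2; 0; 1; 1; 0; 2; 0; 0; 2; 1; 0];
  [:: 0; 2; 2; 2; 0; 2; 0; 0; 2; 1; 0];
  [:: 1; 1; 0; 0; 1; 2; 0; 0; 2; 2; 0];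
  [:: 1; 0; 2; 0; 1; 1; 0; 0; 2; 1; 0];
  [:: 0; 2; 2; 0; 1; 1; 0; 0; 1; 2; 0];
  [:: 1; 0; 0; 2; 2; 1; 0; 0; 2; 1; 0];
  [:: 0; 1; 0; 1; 1; 2; 0; 0; 1; 2; 0];
  [:: 0; 0; 2; 1; 1; 2; 0; 0; 1; 2; 0];
  [:: 1; 1; 1; 0; 0; 0; 1; 0; 1; 1; 0];
  [:: 1; 2; 0; 2; 0; 0; 1; 0; 1; 2; 0];
  [:: 2; 0; 2; 1; 0; 0; 1; 0; 1; 2; 0];
  [:: 0; 1; 1; 1; 0; 0; 2; 0; 2; 1; 0];
  [:: 1; 2; 0; 0; 2; 0; 2; 0; 1; 1; 0];
  [:: 2; 0; 1; 0; 2; 0; 1; 0; 1; 2; 0];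
  [:: 0; 2; 1; 0; 1; 0; 2; 0; 1; 1; 0];
  [:: 2; 0; 0; 2; 1; 0; 2; 0; 1; 1; 0];
  [:: 0; 1; 0; 1; 2; 0; 2; 0; 2; 1; 0];
  [:: 0; 0; 2; 2; 2; 0; 2; 0; 1; 2; 0];
  [:: 2; 2; 0; 0; 0; 1; 1; 0; 1; 1; 0];
  [:: 1; 0; 1; 0; 0; 1; 1; 0; 2; 2; 0];
  [:: 0; 1; 2; 0; 0; 2; 2; 0; 1; 1; 0];
  [:: 2; 0; 0; 1; 0; 1; 2; 0; 1; 2; 0];
  [:: 0; 2; 0; 2; 0; 1; 1; 0; 1; 2; 0];
  [:: 0; 0; 1; 1; 0; 1; 1; 0; 2; 2; 0];
  [:: 1; 0; 0; 0; 1; 1; 1; 0; 1; 2; 0];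
  [:: 0; 2; 0; 0; 1; 2; 1; 0; 2; 1; 0];
  [:: 0; 0; 2; 0; 1; 2; 2; 0; 1; 1; 0];
  [:: 0; 0; 0; 1; 1; 2; 1; 0; 1; 2; 0];
  [:: 1; 1; 2; 0; 0; 0; 0; 1; 1; 2; 0];
  [:: 1; 2; 0; 1; 0; 0; 0; 1; 1; 1; 0];
  [:: 2; 0; 1; 2; 0; 0; 0; 2; 2; 2; 0];
  [:: 0; 2; 1; 1; 0; 0; 0; 2; 2; 1; 0];
  [:: 2; 1; 0; 0; 2; 0; 0; 1; 2; 1; 0];
  [:: 1; 0; 2; 0; 1; 0; 0; 2; 2; 1; 0];
  [:: 0; 2; 1; 0; 1; 0; 0; 2; 2; 1; 0];
  [:: 2; 0; 0; 2; 1; 0; 0; 2; 2; 2; 0];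
  [:: 0; 2; 0; 2; 1; 0; 0; 1; 1; 1; 0];
  [:: 0; 0; 2; 2; 1; 0; 0; 2; 1; 1; 0];
  [:: 1; 1; 0; 0; 0; 2; 0; 1; 2; 2; 0];
  [:: 1; 0; 1; 0; 0; 2; 0; 2; 1; 1; 0];
  [:: 0; 1; 2; 0; 0; 1; 0; 1; 1; 2; 0];
  [:: 2; 0; 0; 2; 0; 1; 0; 2; 2; 2; 0];
  [:: 0; 1; 0; 2; 0; 2; 0; 2; 1; 1; 0];
  [:: 0; 0; 2; 1; 0; 1; 0; 2; 1; 1; 0];
  [:: 1; 0; 0; 0; 2; 1; 0; 1; 1; 2; 0];
  [:: 0; 1; 0; 0; 1; 1; 0; 2; 2; 2; 0];
  [:: 0; 0; 1; 0; 1; 1; 0; 1; 1; 1; 0];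
  [:: 0; 0; 0; 1; 1; 2; 0; 1; 1; 2; 0];
  [:: 1; 2; 0; 0; 0; 0; 1; 1; 2; 1; 0];
  [:: 1; 0; 2; 0; 0; 0; 1; 2; 1; 2; 0];
  [:: 0; 1; 2; 0; 0; 0; 2; 1; 1; 2; 0];
  [:: 2; 0; 0; 2; 0; 0; 1; 2; 2; 2; 0];
  [:: 0; 1; 0; 1; 0; 0; 2; 1; 2; 1; 0];
  [:: 0; 0; 2; 2; 0; 0; 1; 1; 2; 1; 0];
  [:: 1; 0; 0; 0; 2; 0; 1; 2; 1; 1; 0];
  [:: 0; 1; 0; 0; 2; 0; 1; 2; 1; 1; 0];
  [:: 0; 0; 1; 0; 2; 0; 1; 2; 1; 1; 0];
  [:: 0; 0; 0; 1; 1; 0; 2; 1; 2; 2; 0];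
  [:: 1; 0; 0; 0; 0; 1; 2; 2; 2; 1; 0];
  [:: 0; 2; 0; 0; 0; 2; 2; 2; 1; 2; 0];
  [:: 0; 0; 1; 0; 0; 1; 1; 1; 2; 2; 0];
  [:: 0; 0; 0; 2; 0; 1; 2; 1; 1; 2; 0];
  [:: 0; 0; 0; 0; 1; 1; 2; 1; 2; 2; 0];
  [:: 1; 2; 1; 2; 2; 0; 0; 0; 0; 0; 1];
  [:: 2; 2; 2; 1; 0; 1; 0; 0; 0; 0; 1];
  [:: 1; 2; 1; 0; 1; 2; 0; 0; 0; 0; 1];
  [:: 1; 2; 0; 1; 1; 2; 0; 0; 0; 0; 1];
  [:: 1; 0; 2; 1; 2; 2; 0; 0; 0; 0; 1];
  [:: 0; 1; 2; 1; 1; 2; 0; 0; 0; 0; 2];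
  [:: 2; 2; 1; 2; 0; 0; 2; 0; 0; 0; 2];
  [:: 2; 1; 2; 0; 1; 0; 2; 0; 0; 0; 1];
  [:: 1; 1; 0; 1; 2; 0; 1; 0; 0; 0; 1];
  [:: 1; 0; 1; 1; 2; 0; 1; 0; 0; 0; 2];
  [:: 0; 1; 2; 1; 1; 0; 1; 0; 0; 0; 2];
  [:: 1; 1; 2; 0; 0; 1; 2; 0; 0; 0; 2];
  [:: 2; 2; 0; 2; 0; 1; 2; 0; 0; 0; 2];
  [:: 1; 0; 1; 1; 0; 2; 2; 0; 0; 0; 1];
  [:: 0; 1; 2; 2; 0; 1; 1; 0; 0; 0; 2];
  [:: 2; 1; 0; 0; 2; 1; 1; 0; 0; 0; 2];
  [:: 1; 0; 1; 0; 2; 1; 1; 0; 0; 0; 2];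
  [:: 0; 1; 1; 0; 1; 1; 1; 0; 0; 0; 1];
  [:: 2; 0; 0; 1; 1; 2; 1; 0; 0; 0; 2];
  [:: 0; 2; 0; 1; 2; 1; 1; 0; 0; 0; 1];
  [:: 0; 0; 1; 1; 1; 2; 2; 0; 0; 0; 1];
  [:: 1; 1; 2; 2; 0; 0; 0; 1; 0; 0; 1];
  [:: 2; 2; 2; 0; 2; 0; 0; 2; 0; 0; 1];
  [:: 2; 1; 0; 2; 1; 0; 0; 2; 0; 0; 1];
  [:: 1; 0; 2; 2; 2; 0; 0; 1; 0; 0; 1];
  [:: 0; 1; 2; 1; 1; 0; 0; 1; 0; 0; 2];
  [:: 1; 2; 1; 0; 0; 1; 0; 1; 0; 0; 2];
  [:: 2; 1; 0; 1; 0; 2; 0; 1; 0; 0; 2];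
  [:: 1; 0; 2; 2; 0; 1; 0; 1; 0; 0; 1];
  [:: 0; 2; 1; 1; 0; 1; 0; 1; 0; 0; 2];
  [:: 2; 1; 0; 0; 2; 1; 0; 1; 0; 0; 2];
  [:: 1; 0; 2; 0; 1; 1; 0; 2; 0; 0; 2];
  [:: 0; 1; 2; 0; 1; 2; 0; 2; 0; 0; 1];
  [:: 1; 0; 0; 2; 2; 2; 0; 2; 0; 0; 2];
  [:: 0; 1; 0; 2; 2; 2; 0; 2; 0; 0; 2];
  [:: 0; 0; 1; 2; 2; 2; 0; 2; 0; 0; 2];
  [:: 1; 2; 1; 0; 0; 0; 2; 2; 0; 0; 1];
  [:: 2; 2; 0; 2; 0; 0; 2; 1; 0; 0; 2];
  [:: 2; 0; 1; 1; 0; 0; 1; 2; 0; 0; 2];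
  [:: 0; 1; 1; 2; 0; 0; 1; 2; 0; 0; 1];
  [:: 1; 1; 0; 0; 2; 0; 2; 1; 0; 0; 1];
  [:: 1; 0; 1; 0; 2; 0; 1; 1; 0; 0; 2];
  [:: 0; 1; 2; 0; 2; 0; 2; 1; 0; 0; 1];
  [:: 2; 0; 0; 2; 2; 0; 1; 1; 0; 0; 1];
  [:: 0; 2; 0; 1; 1; 0; 1; 2; 0; 0; 2];
  [:: 0; 0; 1; 2; 1; 0; 2; 1; 0; 0; 2];
  [:: 1; 1; 0; 0; 0; 2; 2; 1; 0; 0; 2];
  [:: 1; 0; 1; 0; 0; 2; 2; 1; 0; 0; 2];
  [:: 0; 2; 1; 0; 0; 1; 1; 1; 0; 0; 2];
  [:: 2; 0; 0; 1; 0; 1; 1; 2; 0; 0; 1];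
  [:: 0; 2; 0; 2; 0; 2; 1; 1; 0; 0; 1];
  [:: 0; 0; 1; 1; 0; 2; 2; 2; 0; 0; 1];
  [:: 2; 0; 0; 0; 2; 1; 1; 2; 0; 0; 1];
  [:: 0; 1; 0; 0; 2; 1; 2; 1; 0; 0; 1];
  [:: 0; 0; 2; 0; 1; 2; 1; 1; 0; 0; 1];
  [:: 0; 0; 0; 2; 2; 2; 1; 2; 0; 0; 2];
  [:: 2; 1; 1; 2; 0; 0; 0; 0; 2; 0; 1];
  [:: 2; 1; 1; 0; 1; 0; 0; 0; 2; 0; 1];
  [:: 2; 2; 0; 1; 1; 0; 0; 0; 2; 0; 1];
  [:: 1; 0; 1; 1; 1; 0; 0; 0; 1; 0; 1];
  [:: 0; 1; 2; 1; 1; 0; 0; 0; 1; 0; 2];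
  [:: 2; 1; 1; 0; 0; 1; 0; 0; 2; 0; 1];
  [:: 1; 1; 0; 1; 0; 1; 0; 0; 2; 0; 2];
  [:: 2; 0; 1; 2; 0; 2; 0; 0; 1; 0; 1];
  [:: 0; 2; 2; 2; 0; 2; 0; 0; 2; 0; 1];
  [:: 1; 2; 0; 0; 1; 2; 0; 0; 1; 0; 1];
  [:: 2; 0; 2; 0; 2; 1; 0; 0; 1; 0; 1];
  [:: 0; 1; 1; 0; 1; 2; 0; 0; 2; 0; 2];
  [:: 1; 0; 0; 1; 1; 1; 0; 0; 2; 0; 2];
  [:: 0; 2; 0; 2; 1; 1; 0; 0; 1; 0; 2];
  [:: 0; 0; 2; 1; 2; 1; 0; 0; 1; 0; 1];
  [:: 2; 1; 1; 0; 0; 0; 1; 0; 2; 0; 1];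
  [:: 2; 2; 0; 2; 0; 0; 2; 0; 1; 0; 2];
  [:: 1; 0; 1; 2; 0; 0; 2; 0; 2; 0; 1];
  [:: 0; 2; 1; 1; 0; 0; 1; 0; 2; 0; 2];
  [:: 1; 1; 0; 0; 1; 0; 2; 0; 2; 0; 2];
  [:: 2; 0; 2; 0; 1; 0; 2; 0; 1; 0; 1];
  [:: 0; 1; 2; 0; 2; 0; 1; 0; 2; 0; 1];
  [:: 1; 0; 0; 2; 1; 0; 1; 0; 2; 0; 1];
  [:: 0; 1; 0; 1; 2; 0; 2; 0; 1; 0; 2];
  [:: 0; 0; 2; 2; 1; 0; 1; 0; 2; 0; 1];
  [:: 1; 1; 0; 0; 0; 2; 1; 0; 1; 0; 2];
  [:: 1; 0; 2; 0; 0; 2; 1; 0; 2; 0; 1];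
  [:: 0; 1; 1; 0; 0; 2; 1; 0; 1; 0; 2];
  [:: 1; 0; 0; 1; 0; 1; 2; 0; 2; 0; 2];
  [:: 0; 2; 0; 1; 0; 1; 2; 0; 2; 0; 1];
  [:: 0; 0; 1; 1; 0; 2; 2; 0; 1; 0; 1];
  [:: 2; 0; 0; 0; 2; 2; 2; 0; 2; 0; 1];
  [:: 0; 1; 0; 0; 2; 2; 1; 0; 1; 0; 2];
  [:: 0; 0; 2; 0; 2; 1; 1; 0; 1; 0; 1];
  [:: 0; 0; 0; 1; 2; 1; 2; 0; 1; 0; 2];
  [:: 1; 2; 2; 0; 0; 0; 0; 1; 1; 0; 2];
  [:: 1; 2; 0; 1; 0; 0; 0; 2; 1; 0; 1];
  [:: 1; 0; 2; 2; 0; 0; 0; 1; 1; 0; 1];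
  [:: 0; 2; 1; 1; 0; 0; 0; 2; 1; 0; 1];
  [:: 2; 2; 0; 0; 1; 0; 0; 1; 1; 0; 2];
  [:: 2; 0; 1; 0; 1; 0; 0; 1; 1; 0; 2];
  [:: 0; 1; 1; 0; 2; 0; 0; 2; 1; 0; 2];
  [:: 1; 0; 0; 1; 2; 0; 0; 2; 2; 0; 1];
  [:: 0; 2; 0; 1; 1; 0; 0; 2; 1; 0; 1];
  [:: 0; 0; 2; 2; 1; 0; 0; 2; 1; 0; 1];
  [:: 1; 1; 0; 0; 0; 1; 0; 1; 1; 0; 1];
  [:: 2; 0; 2; 0; 0; 1; 0; 1; 2; 0; 1];
  [:: 0; 2; 1; 0; 0; 1; 0; 1; 2; 0; 2];
  [:: 2; 0; 0; 2; 0; 2; 0; 1; 1; 0; 1];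
  [:: 0; 1; 0; 2; 0; 1; 0; 1; 2; 0; 2];
  [:: 0; 0; 2; 1; 0; 2; 0; 1; 1; 0; 2];
  [:: 2; 0; 0; 0; 1; 1; 0; 1; 1; 0; 2];
  [:: 0; 1; 0; 0; 1; 1; 0; 2; 2; 0; 1];
  [:: 0; 0; 1; 0; 1; 2; 0; 1; 2; 0; 2];
  [:: 0; 0; 0; 1; 1; 1; 0; 1; 2; 0; 1];
  [:: 1; 2; 0; 0; 0; 0; 1; 1; 2; 0; 1];
  [:: 2; 0; 1; 0; 0; 0; 1; 1; 1; 0; 1];
  [:: 0; 1; 2; 0; 0; 0; 2; 2; 2; 0; 2];
  [:: 1; 0; 0; 2; 0; 0; 1; 2; 1; 0; 2];
  [:: 0; 2; 0; 1; 0; 0; 2; 2; 1; 0; 1];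
  [:: 0; 0; 2; 1; 0; 0; 2; 2; 2; 0; 2];
  [:: 1; 0; 0; 0; 2; 0; 1; 2; 2; 0; 1];
  [:: 0; 1; 0; 0; 2; 0; 2; 1; 1; 0; 1];
  [:: 0; 0; 2; 0; 1; 0; 2; 2; 2; 0; 2];
  [:: 0; 0; 0; 2; 1; 0; 1; 1; 2; 0; 1];
  [:: 2; 0; 0; 0; 0; 1; 1; 2; 1; 0; 1];
  [:: 0; 2; 0; 0; 0; 1; 2; 1; 2; 0; 1];
  [:: 0; 0; 2; 0; 0; 1; 2; 2; 2; 0; 2];
  [:: 0; 0; 0; 2; 0; 1; 2; 1; 1; 0; 1];
  [:: 0; 0; 0; 0; 1; 2; 2; 2; 1; 0; 1];
  [:: 2; 1; 2; 2; 0; 0; 0; 0; 0; 1; 1];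
  [:: 2; 2; 1; 0; 1; 0; 0; 0; 0; 1; 2];
  [:: 2; 1; 0; 1; 2; 0; 0; 0; 0; 1; 1];
  [:: 2; 0; 1; 1; 2; 0; 0; 0; 0; 1; 1];
  [:: 0; 2; 1; 2; 2; 0; 0; 0; 0; 1; 1];
  [:: 2; 1; 2; 0; 0; 2; 0; 0; 0; 2; 2];
  [:: 1; 2; 0; 1; 0; 2; 0; 0; 0; 1; 2];
  [:: 1; 0; 1; 2; 0; 1; 0; 0; 0; 1; 1];
  [:: 0; 1; 1; 2; 0; 1; 0; 0; 0; 2; 1];
  [:: 1; 2; 0; 0; 1; 2; 0; 0; 0; 2; 1];
  [:: 2; 0; 2; 0; 1; 2; 0; 0; 0; 2; 2];
  [:: 0; 1; 1; 0; 2; 2; 0; 0; 0; 1; 1];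
  [:: 1; 0; 0; 2; 1; 1; 0; 0; 0; 2; 2];
  [:: 0; 1; 0; 2; 1; 1; 0; 0; 0; 2; 1];
  [:: 0; 0; 1; 1; 2; 1; 0; 0; 0; 2; 2];
  [:: 1; 2; 2; 0; 0; 0; 1; 0; 0; 1; 1];
  [:: 2; 2; 0; 2; 0; 0; 2; 0; 0; 1; 2];
  [:: 1; 0; 2; 1; 0; 0; 2; 0; 0; 1; 2];
  [:: 0; 2; 2; 2; 0; 0; 1; 0; 0; 1; 1];
  [:: 2; 1; 0; 0; 1; 0; 1; 0; 0; 2; 1];
  [:: 1; 0; 1; 0; 2; 0; 1; 0; 0; 2; 2];
  [:: 0; 2; 2; 0; 1; 0; 1; 0; 0; 1; 1];
  [:: 1; 0; 0; 2; 1; 0; 1; 0; 0; 2; 2];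
  [:: 0; 2; 0; 1; 1; 0; 2; 0; 0; 2; 1];
  [:: 0; 0; 2; 2; 2; 0; 2; 0; 0; 2; 1];
  [:: 2; 1; 0; 0; 0; 2; 2; 0; 0; 1; 1];
  [:: 2; 0; 2; 0; 0; 2; 1; 0; 0; 2; 2];
  [:: 0; 1; 1; 0; 0; 1; 2; 0; 0; 2; 2];
  [:: 1; 0; 0; 2; 0; 2; 1; 0; 0; 1; 1];
  [:: 0; 1; 0; 2; 0; 1; 1; 0; 0; 2; 1];
  [:: 0; 0; 2; 2; 0; 1; 1; 0; 0; 1; 2];
  [:: 1; 0; 0; 0; 2; 2; 1; 0; 0; 2; 1];
  [:: 0; 1; 0; 0; 2; 2; 1; 0; 0; 2; 1];
  [:: 0; 0; 1; 0; 1; 1; 2; 0; 0; 1; 2];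
  [:: 0; 0; 0; 2; 1; 1; 2; 0; 0; 1; 2];
  [:: 1; 1; 2; 0; 0; 0; 0; 2; 0; 1; 2];
  [:: 1; 1; 0; 1; 0; 0; 0; 2; 0; 1; 2];
  [:: 2; 0; 1; 1; 0; 0; 0; 2; 0; 1; 2];
  [:: 0; 1; 1; 1; 0; 0; 0; 1; 0; 1; 1];
  [:: 1; 1; 0; 0; 1; 0; 0; 2; 0; 1; 2];
  [:: 1; 0; 1; 0; 1; 0; 0; 2; 0; 2; 1];
  [:: 0; 1; 2; 0; 2; 0; 0; 1; 0; 1; 2];
  [:: 2; 0; 0; 1; 2; 0; 0; 1; 0; 1; 1];
  [:: 0; 2; 0; 2; 1; 0; 0; 1; 0; 1; 2];
  [:: 0; 0; 1; 1; 1; 0; 0; 2; 0; 2; 1];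
  [:: 1; 1; 0; 0; 0; 1; 0; 2; 0; 1; 2];
  [:: 2; 0; 2; 0; 0; 2; 0; 1; 0; 2; 2];
  [:: 0; 1; 2; 0; 0; 2; 0; 2; 0; 1; 1];
  [:: 1; 0; 0; 1; 0; 2; 0; 2; 0; 2; 1];
  [:: 0; 2; 0; 1; 0; 2; 0; 1; 0; 1; 2];
  [:: 0; 0; 2; 1; 0; 1; 0; 2; 0; 1; 1];
  [:: 1; 0; 0; 0; 2; 1; 0; 1; 0; 2; 1];
  [:: 0; 2; 0; 0; 2; 1; 0; 2; 0; 1; 1];
  [:: 0; 0; 1; 0; 1; 2; 0; 2; 0; 2; 1];
  [:: 0; 0; 0; 2; 2; 2; 0; 2; 0; 1; 2];
  [:: 2; 2; 0; 0; 0; 0; 1; 1; 0; 2; 1];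
  [:: 2; 0; 1; 0; 0; 0; 2; 1; 0; 1; 1];
  [:: 0; 2; 2; 0; 0; 0; 1; 1; 0; 1; 1];
  [:: 2; 0; 0; 1; 0; 0; 1; 1; 0; 2; 2];
  [:: 0; 1; 0; 1; 0; 0; 1; 1; 0; 2; 2];
  [:: 0; 0; 1; 2; 0; 0; 2; 2; 0; 1; 1];
  [:: 1; 0; 0; 0; 1; 0; 1; 1; 0; 1; 1];
  [:: 0; 2; 0; 0; 1; 0; 1; 2; 0; 1; 2];
  [:: 0; 0; 2; 0; 2; 0; 1; 1; 0; 1; 2];
  [:: 0; 0; 0; 1; 1; 0; 1; 1; 0; 2; 2];
  [:: 2; 0; 0; 0; 0; 1; 1; 2; 0; 1; 1];
  [:: 0; 1; 0; 0; 0; 1; 1; 1; 0; 1; 2];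
  [:: 0; 0; 2; 0; 0; 1; 2; 1; 0; 2; 1];
  [:: 0; 0; 0; 2; 0; 1; 2; 2; 0; 1; 1];
  [:: 0; 0; 0; 0; 1; 1; 2; 1; 0; 1; 2];
  [:: 1; 2; 2; 0; 0; 0; 0; 0; 1; 1; 2];
  [:: 2; 1; 0; 1; 0; 0; 0; 0; 1; 2; 2];
  [:: 1; 0; 1; 2; 0; 0; 0; 0; 1; 1; 2];
  [:: 0; 1; 1; 2; 0; 0; 0; 0; 1; 1; 2];
  [:: 1; 2; 0; 0; 2; 0; 0; 0; 2; 2; 2];
  [:: 2; 0; 1; 0; 2; 0; 0; 0; 1; 2; 1];
  [:: 0; 1; 2; 0; 1; 0; 0; 0; 1; 1; 1];
  [:: 2; 0; 0; 1; 2; 0; 0; 0; 2; 1; 1];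
  [:: 0; 2; 0; 1; 2; 0; 0; 0; 2; 2; 2];
  [:: 0; 0; 2; 1; 1; 0; 0; 0; 2; 2; 1];
  [:: 2; 2; 0; 0; 0; 1; 0; 0; 1; 1; 1];
  [:: 2; 0; 2; 0; 0; 2; 0; 0; 1; 2; 2];
  [:: 0; 2; 1; 0; 0; 2; 0; 0; 1; 2; 1];
  [:: 1; 0; 0; 1; 0; 1; 0; 0; 2; 1; 2];
  [:: 0; 1; 0; 2; 0; 1; 0; 0; 2; 2; 1];
  [:: 0; 0; 2; 1; 0; 1; 0; 0; 2; 2; 1];
  [:: 1; 0; 0; 0; 2; 2; 0; 0; 1; 1; 2];
  [:: 0; 2; 0; 0; 2; 1; 0; 0; 2; 2; 2];
  [:: 0; 0; 2; 0; 2; 1; 0; 0; 1; 1; 1];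
  [:: 0; 0; 0; 2; 2; 1; 0; 0; 2; 1; 1];
  [:: 1; 2; 0; 0; 0; 0; 2; 0; 1; 2; 1];
  [:: 1; 0; 1; 0; 0; 0; 2; 0; 1; 2; 1];
  [:: 0; 1; 1; 0; 0; 0; 2; 0; 1; 2; 2];
  [:: 1; 0; 0; 1; 0; 0; 2; 0; 1; 2; 1];
  [:: 0; 1; 0; 1; 0; 0; 2; 0; 2; 1; 1];
  [:: 0; 0; 1; 2; 0; 0; 1; 0; 1; 1; 2];
  [:: 1; 0; 0; 0; 1; 0; 2; 0; 1; 2; 1];
  [:: 0; 2; 0; 0; 2; 0; 1; 0; 2; 2; 2];
  [:: 0; 0; 1; 0; 2; 0; 2; 0; 2; 1; 1];
  [:: 0; 0; 0; 2; 1; 0; 1; 0; 2; 1; 1];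
  [:: 2; 0; 0; 0; 0; 1; 1; 0; 2; 1; 2];
  [:: 0; 1; 0; 0; 0; 2; 1; 0; 1; 1; 2];
  [:: 0; 0; 1; 0; 0; 1; 1; 0; 2; 2; 2];
  [:: 0; 0; 0; 1; 0; 1; 1; 0; 1; 1; 1];
  [:: 0; 0; 0; 0; 1; 1; 2; 0; 1; 1; 2];
  [:: 2; 2; 0; 0; 0; 0; 0; 1; 1; 2; 1];
  [:: 1; 0; 1; 0; 0; 0; 0; 1; 2; 2; 2];
  [:: 0; 1; 2; 0; 0; 0; 0; 1; 1; 2; 1];
  [:: 2; 0; 0; 2; 0; 0; 0; 2; 2; 2; 1];
  [:: 0; 1; 0; 2; 0; 0; 0; 1; 2; 1; 2];
  [:: 0; 0; 1; 2; 0; 0; 0; 2; 1; 1; 2];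
  [:: 2; 0; 0; 0; 1; 0; 0; 1; 1; 1; 2];
  [:: 0; 2; 0; 0; 2; 0; 0; 1; 2; 2; 2];
  [:: 0; 0; 1; 0; 1; 0; 0; 2; 1; 2; 1];
  [:: 0; 0; 0; 2; 2; 0; 0; 1; 1; 2; 1];
  [:: 2; 0; 0; 0; 0; 2; 0; 1; 2; 1; 1];
  [:: 0; 1; 0; 0; 0; 2; 0; 1; 2; 1; 1];
  [:: 0; 0; 1; 0; 0; 2; 0; 1; 2; 1; 1];
  [:: 0; 0; 0; 1; 0; 2; 0; 1; 2; 1; 1];
  [:: 0; 0; 0; 0; 1; 1; 0; 2; 1; 2; 2];
  [:: 2; 0; 0; 0; 0; 0; 1; 1; 2; 1; 2];
  [:: 0; 1; 0; 0; 0; 0; 1; 2; 2; 2; 1];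
  [:: 0; 0; 2; 0; 0; 0; 2; 2; 2; 1; 2];
  [:: 0; 0; 0; 1; 0; 0; 1; 1; 1; 2; 2];
  [:: 0; 0; 0; 0; 2; 0; 1; 2; 1; 1; 2];
  [:: 0; 0; 0; 0; 0; 1; 1; 2; 1; 2; 2]].

Definition witness_10_6 : seq (seq nat) := [::
  [:: 2; 1; 1; 1; 2; 2; 0; 0; 0; 0];
  [:: 1; 1; 2; 2; 1; 0; 1; 0; 0; 0];
  [:: 2; 1; 1; 1; 0; 2; 1; 0; 0; 0];
  [:: 2; 2; 1; 0; 2; 1; 2; 0; 0; 0];
  [:: 1; 2; 0; 2; 1; 1; 2; 0; 0; 0];
  [:: 1; 0; 2; 2; 1; 1; 1; 0; 0; 0];
  [:: 0; 2; 1; 2; 2; 2; 2; 0; 0; 0];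
  [:: 1; 1; 2; 1; 2; 0; 0; 1; 0; 0];
  [:: 2; 1; 1; 1; 0; 2; 0; 2; 0; 0];
  [:: 2; 2; 1; 0; 1; 2; 0; 2; 0; 0];
  [:: 1; 2; 0; 2; 1; 1; 0; 2; 0; 0];
  [:: 1; 0; 2; 2; 2; 1; 0; 1; 0; 0];
  [:: 0; 2; 1; 2; 2; 2; 0; 1; 0; 0];
  [:: 1; 1; 2; 2; 0; 0; 1; 1; 0; 0];
  [:: 1; 1; 2; 0; 2; 0; 1; 1; 0; 0];
  [:: 2; 1; 0; 2; 1; 0; 1; 2; 0; 0];
  [:: 2; 0; 1; 1; 1; 0; 2; 2; 0; 0];
  [:: 0; 1; 2; 1; 1; 0; 2; 2; 0; 0];
  [:: 2; 2; 1; 0; 0; 2; 2; 2; 0; 0];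
  [:: 1; 2; 0; 2; 0; 2; 2; 1; 0; 0];
  [:: 1; 0; 2; 2; 0; 1; 2; 1; 0; 0];
  [:: 0; 2; 1; 2; 0; 2; 2; 2; 0; 0];
  [:: 1; 2; 0; 0; 2; 2; 2; 1; 0; 0];
  [:: 1; 0; 2; 0; 1; 2; 1; 2; 0; 0];
  [:: 0; 2; 1; 0; 2; 2; 1; 1; 0; 0];
  [:: 2; 0; 0; 1; 1; 1; 1; 2; 0; 0];
  [:: 0; 2; 0; 1; 2; 2; 1; 1; 0; 0];
  [:: 0; 0; 2; 1; 1; 1; 1; 2; 0; 0];
  [:: 1; 1; 1; 2; 1; 0; 0; 0; 1; 0];
  [:: 2; 1; 2; 2; 0; 2; 0; 0; 2; 0];
  [:: 2; 1; 2; 0; 2; 2; 0; 0; 2; 0];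
  [:: 1; 1; 0; 1; 2; 2; 0; 0; 2; 0];
  [:: 1; 0; 1; 1; 2; 1; 0; 0; 1; 0];
  [:: 0; 2; 2; 1; 2; 2; 0; 0; 1; 0];
  [:: 1; 1; 1; 1; 0; 0; 2; 0; 1; 0];
  [:: 1; 1; 1; 0; 2; 0; 2; 0; 1; 0];
  [:: 2; 1; 0; 2; 1; 0; 1; 0; 1; 0];
  [:: 2; 0; 2; 2; 1; 0; 1; 0; 2; 0];
  [:: 0; 1; 1; 2; 1; 0; 1; 0; 2; 0];
  [:: 2; 1; 2; 0; 0; 2; 1; 0; 2; 0];
  [:: 1; 1; 0; 1; 0; 2; 1; 0; 2; 0];
  [:: 1; 0; 1; 2; 0; 1; 2; 0; 1; 0];
  [:: 0; 1; 2; 1; 0; 2; 1; 0; 1; 0];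
  [:: 1; 2; 0; 0; 2; 2; 2; 0; 2; 0];
  [:: 1; 0; 1; 0; 2; 1; 2; 0; 1; 0];
  [:: 0; 2; 2; 0; 2; 2; 2; 0; 1; 0];
  [:: 2; 0; 0; 2; 1; 1; 1; 0; 1; 0];
  [:: 0; 2; 0; 2; 2; 2; 2; 0; 1; 0];
  [:: 0; 0; 1; 2; 1; 1; 1; 0; 2; 0];
  [:: 1; 1; 1; 2; 0; 0; 0; 1; 1; 0];
  [:: 1; 1; 1; 0; 2; 0; 0; 1; 1; 0];
  [:: 2; 1; 0; 1; 2; 0; 0; 1; 1; 0];
  [:: 2; 0; 2; 1; 1; 0; 0; 2; 2; 0];
  [:: 0; 1; 1; 1; 2; 0; 0; 1; 2; 0];
  [:: 2; 1; 2; 0; 0; 2; 0; 2; 2; 0];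
  [:: 1; 1; 0; 1; 0; 2; 0; 2; 2; 0];
  [:: 1; 0; 1; 1; 0; 1; 0; 2; 1; 0];
  [:: 0; 1; 2; 1; 0; 2; 0; 2; 1; 0];
  [:: 1; 2; 0; 0; 1; 2; 0; 2; 2; 0];
  [:: 1; 0; 1; 0; 2; 1; 0; 1; 1; 0];
  [:: 0; 2; 2; 0; 1; 1; 0; 1; 1; 0];
  [:: 2; 0; 0; 2; 2; 1; 0; 1; 1; 0];
  [:: 0; 2; 0; 2; 1; 2; 0; 2; 1; 0];
  [:: 0; 0; 1; 2; 2; 1; 0; 1; 2; 0];
  [:: 1; 1; 1; 0; 0; 0; 2; 2; 1; 0];
  [:: 2; 1; 0; 2; 0; 0; 1; 1; 1; 0];
  [:: 2; 0; 2; 2; 0; 0; 1; 1; 2; 0];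
  [:: 0; 1; 1; 2; 0; 0; 1; 1; 2; 0];
  [:: 2; 1; 0; 0; 2; 0; 1; 1; 1; 0];
  [:: 2; 0; 2; 0; 1; 0; 1; 2; 2; 0];
  [:: 0; 1; 1; 0; 2; 0; 1; 1; 2; 0];
  [:: 1; 0; 0; 1; 1; 0; 2; 2; 2; 0];
  [:: 0; 1; 0; 2; 1; 0; 1; 2; 2; 0];
  [:: 0; 0; 2; 1; 1; 0; 2; 2; 1; 0];
  [:: 1; 2; 0; 0; 0; 2; 2; 2; 2; 0];
  [:: 1; 0; 1; 0; 0; 1; 2; 2; 1; 0];
  [:: 0; 2; 2; 0; 0; 2; 2; 2; 1; 0];
  [:: 2; 0; 0; 2; 0; 1; 1; 1; 1; 0];
  [:: 0; 2; 0; 2; 0; 2; 2; 2; 1; 0];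
  [:: 0; 0; 1; 2; 0; 1; 1; 1; 2; 0];
  [:: 2; 0; 0; 0; 1; 1; 1; 2; 1; 0];
  [:: 0; 2; 0; 0; 1; 1; 1; 1; 1; 0];
  [:: 0; 0; 1; 0; 1; 1; 1; 2; 2; 0];
  [:: 0; 0; 0; 1; 1; 1; 1; 2; 2; 0];
  [:: 2; 1; 1; 2; 1; 0; 0; 0; 0; 2];
  [:: 1; 2; 2; 2; 0; 1; 0; 0; 0; 2];
  [:: 1; 1; 2; 0; 2; 1; 0; 0; 0; 1];
  [:: 2; 1; 0; 1; 1; 2; 0; 0; 0; 1];
  [:: 2; 0; 1; 1; 1; 1; 0; 0; 0; 2];
  [:: 0; 1; 2; 1; 1; 2; 0; 0; 0; 1];
  [:: 2; 2; 1; 1; 0; 0; 2; 0; 0; 1];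
  [:: 2; 1; 1; 0; 1; 0; 2; 0; 0; 2];
  [:: 1; 1; 0; 2; 2; 0; 1; 0; 0; 2];
  [:: 1; 0; 2; 2; 2; 0; 1; 0; 0; 1];
  [:: 0; 1; 1; 2; 2; 0; 1; 0; 0; 2];
  [:: 1; 2; 2; 0; 0; 1; 1; 0; 0; 2];
  [:: 2; 1; 0; 1; 0; 1; 1; 0; 0; 2];
  [:: 2; 0; 1; 1; 0; 2; 1; 0; 0; 1];
  [:: 0; 2; 2; 1; 0; 1; 1; 0; 0; 2];
  [:: 2; 1; 0; 0; 2; 1; 2; 0; 0; 1];
  [:: 2; 0; 1; 0; 1; 2; 2; 0; 0; 2];
  [:: 0; 1; 2; 0; 2; 1; 2; 0; 0; 1];
  [:: 1; 0; 0; 2; 2; 2; 2; 0; 0; 1];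
  [:: 0; 1; 0; 2; 2; 1; 2; 0; 0; 1];
  [:: 0; 0; 1; 2; 1; 2; 2; 0; 0; 2];
  [:: 2; 1; 1; 2; 0; 0; 0; 1; 0; 2];
  [:: 2; 1; 1; 0; 2; 0; 0; 1; 0; 2];
  [:: 1; 1; 0; 1; 2; 0; 0; 1; 0; 2];
  [:: 1; 0; 2; 1; 2; 0; 0; 1; 0; 1];
  [:: 0; 1; 1; 1; 2; 0; 0; 1; 0; 2];
  [:: 1; 2; 2; 0; 0; 1; 0; 2; 0; 1];
  [:: 2; 1; 0; 1; 0; 2; 0; 1; 0; 1];
  [:: 2; 0; 1; 1; 0; 1; 0; 1; 0; 2];
  [:: 0; 1; 2; 1; 0; 2; 0; 1; 0; 1];
  [:: 2; 2; 0; 0; 1; 2; 0; 2; 0; 1];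
  [:: 2; 0; 1; 0; 1; 2; 0; 2; 0; 2];
  [:: 0; 1; 2; 0; 1; 1; 0; 2; 0; 1];
  [:: 1; 0; 0; 2; 2; 1; 0; 1; 0; 2];
  [:: 0; 2; 0; 2; 1; 2; 0; 2; 0; 1];
  [:: 0; 0; 1; 2; 2; 1; 0; 2; 0; 2];
  [:: 2; 1; 1; 0; 0; 0; 2; 1; 0; 2];
  [:: 1; 2; 0; 2; 0; 0; 1; 2; 0; 1];
  [:: 1; 0; 2; 2; 0; 0; 1; 2; 0; 1];
  [:: 0; 2; 1; 2; 0; 0; 1; 2; 0; 1];
  [:: 1; 1; 0; 0; 2; 0; 1; 1; 0; 2];
  [:: 1; 0; 2; 0; 2; 0; 1; 1; 0; 1];
  [:: 0; 1; 1; 0; 2; 0; 1; 1; 0; 2];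
  [:: 2; 0; 0; 1; 1; 0; 2; 2; 0; 1];
  [:: 0; 2; 0; 1; 1; 0; 2; 1; 0; 1];
  [:: 0; 0; 2; 1; 1; 0; 2; 2; 0; 1];
  [:: 2; 1; 0; 0; 0; 1; 2; 2; 0; 1];
  [:: 2; 0; 1; 0; 0; 2; 2; 1; 0; 2];
  [:: 0; 1; 2; 0; 0; 1; 2; 2; 0; 1];
  [:: 1; 0; 0; 2; 0; 2; 2; 2; 0; 2];
  [:: 0; 1; 0; 2; 0; 1; 2; 2; 0; 2];
  [:: 0; 0; 1; 2; 0; 2; 2; 1; 0; 2];
  [:: 1; 0; 0; 0; 2; 2; 1; 1; 0; 2];
  [:: 0; 1; 0; 0; 2; 1; 2; 1; 0; 1];
  [:: 0; 0; 1; 0; 2; 2; 1; 1; 0; 2];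
  [:: 0; 0; 0; 1; 2; 1; 1; 1; 0; 2];
  [:: 2; 2; 2; 2; 0; 0; 0; 0; 2; 1];
  [:: 2; 2; 2; 0; 2; 0; 0; 0; 2; 1];
  [:: 1; 1; 0; 2; 1; 0; 0; 0; 2; 2];
  [:: 1; 0; 1; 2; 1; 0; 0; 0; 1; 1];
  [:: 0; 1; 2; 2; 1; 0; 0; 0; 1; 2];
  [:: 1; 2; 1; 0; 0; 1; 0; 0; 1; 2];
  [:: 2; 1; 0; 2; 0; 2; 0; 0; 1; 2];
  [:: 2; 0; 2; 2; 0; 2; 0; 0; 2; 1];
  [:: 0; 2; 1; 2; 0; 1; 0; 0; 2; 2];
  [:: 2; 1; 0; 0; 2; 1; 0; 0; 1; 1];
  [:: 2; 0; 2; 0; 2; 2; 0; 0; 2; 2];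
  [:: 0; 1; 1; 0; 2; 1; 0; 0; 2; 1];
  [:: 1; 0; 0; 1; 1; 1; 0; 0; 2; 2];
  [:: 0; 1; 0; 1; 1; 2; 0; 0; 2; 1];
  [:: 0; 0; 2; 1; 1; 1; 0; 0; 1; 2];
  [:: 2; 2; 2; 0; 0; 0; 1; 0; 2; 1];
  [:: 1; 2; 0; 1; 0; 0; 1; 0; 2; 1];
  [:: 1; 0; 1; 1; 0; 0; 2; 0; 1; 1];
  [:: 0; 2; 2; 1; 0; 0; 2; 0; 1; 1];
  [:: 1; 1; 0; 0; 2; 0; 2; 0; 2; 2];
  [:: 1; 0; 1; 0; 1; 0; 2; 0; 1; 1];
  [:: 0; 1; 2; 0; 1; 0; 2; 0; 1; 2];
  [:: 2; 0; 0; 2; 1; 0; 1; 0; 1; 1];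
  [:: 0; 1; 0; 2; 2; 0; 1; 0; 1; 2];
  [:: 0; 0; 1; 2; 2; 0; 1; 0; 2; 1];
  [:: 2; 2; 0; 0; 0; 1; 1; 0; 1; 2];
  [:: 2; 0; 2; 0; 0; 2; 1; 0; 2; 1];
  [:: 0; 2; 1; 0; 0; 1; 1; 0; 2; 2];
  [:: 1; 0; 0; 1; 0; 2; 1; 0; 2; 1];
  [:: 0; 1; 0; 1; 0; 1; 1; 0; 2; 2];
  [:: 0; 0; 2; 1; 0; 2; 1; 0; 1; 1];
  [:: 1; 0; 0; 0; 2; 2; 2; 0; 2; 1];
  [:: 0; 1; 0; 0; 2; 1; 2; 0; 2; 1];
  [:: 0; 0; 2; 0; 1; 2; 2; 0; 1; 1];
  [:: 0; 0; 0; 2; 1; 2; 2; 0; 1; 2];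
  [:: 2; 2; 2; 0; 0; 0; 0; 2; 2; 2];
  [:: 1; 1; 0; 2; 0; 0; 0; 1; 2; 2];
  [:: 1; 0; 1; 2; 0; 0; 0; 1; 1; 1];
  [:: 0; 1; 2; 2; 0; 0; 0; 1; 1; 2];
  [:: 1; 1; 0; 0; 2; 0; 0; 1; 2; 2];
  [:: 1; 0; 1; 0; 2; 0; 0; 1; 1; 1];
  [:: 0; 1; 2; 0; 2; 0; 0; 1; 1; 2];
  [:: 2; 0; 0; 1; 2; 0; 0; 1; 1; 1];
  [:: 0; 1; 0; 1; 2; 0; 0; 1; 1; 2];
  [:: 0; 0; 1; 1; 2; 0; 0; 1; 2; 1];
  [:: 2; 1; 0; 0; 0; 1; 0; 2; 1; 1];
  [:: 2; 0; 2; 0; 0; 2; 0; 2; 2; 2];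
  [:: 0; 1; 1; 0; 0; 1; 0; 2; 2; 1];
  [:: 1; 0; 0; 1; 0; 1; 0; 1; 2; 2];
  [:: 0; 1; 0; 1; 0; 2; 0; 1; 2; 1];
  [:: 0; 0; 2; 1; 0; 1; 0; 1; 1; 2];
  [:: 1; 0; 0; 0; 1; 2; 0; 2; 2; 2];
  [:: 0; 1; 0; 0; 1; 1; 0; 2; 2; 1];
  [:: 0; 0; 2; 0; 1; 2; 0; 2; 1; 2];
  [:: 0; 0; 0; 2; 2; 1; 0; 1; 1; 2];
  [:: 1; 1; 0; 0; 0; 0; 2; 2; 2; 2];
  [:: 1; 0; 1; 0; 0; 0; 2; 1; 1; 1];
  [:: 0; 1; 2; 0; 0; 0; 2; 1; 1; 2];
  [:: 2; 0; 0; 2; 0; 0; 1; 1; 1; 1];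
  [:: 0; 1; 0; 2; 0; 0; 1; 2; 1; 2];
  [:: 0; 0; 1; 2; 0; 0; 1; 2; 2; 1];
  [:: 2; 0; 0; 0; 2; 0; 1; 1; 1; 1];
  [:: 0; 1; 0; 0; 2; 0; 1; 1; 1; 2];
  [:: 0; 0; 1; 0; 2; 0; 1; 1; 2; 1];
  [:: 0; 0; 0; 2; 1; 0; 1; 2; 2; 1];
  [:: 1; 0; 0; 0; 0; 2; 2; 2; 2; 1];
  [:: 0; 1; 0; 0; 0; 1; 2; 2; 2; 1];
  [:: 0; 0; 2; 0; 0; 2; 2; 1; 1; 2];
  [:: 0; 0; 0; 2; 0; 2; 2; 1; 1; 2];
  [:: 0; 0; 0; 0; 2; 2; 1; 1; 1; 2]].

Theorem lemma2p13 :
  admissible_of_type 11 7 /\ admissible_of_type 11 6 /\ admissible_of_type 10 6.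
Proof.
split; [|split].
- by apply: (@admissible_of_witness _ _ witness_11_7); vm_compute.
- by apply: (@admissible_of_witness _ _ witness_11_6); vm_compute.
- by apply: (@admissible_of_witness _ _ witness_10_6); vm_compute.
Qed.
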